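(* The Lack model structure on $2\mathrm{Cat}$ is right-induced along $\mathbb{H}\colon 2\mathrm{Cat}\to\mathrm{DblCat}$ (from the adjunction $L\dashv\mathbb{H}$) from the model structure on $\mathrm{DblCat}$ right-induced along $(\mathbf{H},\mathcal{V})$ from two copies of the Lack model structure. That is, a 2-functor $F\colon\mathcal{A}\to\mathcal{B}$ is a biequivalence (resp.\ Lack fibration) if and only if $\mathbb{H}F\colon\mathbb{H}\mathcal{A}\to\mathbb{H}\mathcal{B}$ is a weak equivalence (resp.\ fibration) in $\mathrm{DblCat}$, i.e.\ a double biequivalence (resp.\ double fibration).
   Context: $\mathbb{H}\colon 2\mathrm{Cat}\to\mathrm{DblCat}$ sends a 2-category to the double category with the same objects, its morphisms as horizontal morphisms, only identity vertical morphisms, and its 2-cells as squares; it has a left adjoint $L$. $\mathbf{H}$ sends a double category to its underlying horizontal 2-category (objects, horizontal morphisms, squares with identity vertical boundaries as 2-cells). $\mathcal{V}\mathbb{A}$ is the 2-category with vertical morphisms as objects, squares as morphisms, and as 2-cells from $\alpha\colon(u\,{}^{a}_{b}\,v)$ to $\beta\colon(u\,{}^{c}_{d}\,v)$ pairs of squares with identity vertical boundaries $\sigma_0\colon a\Rightarrow c$, $\sigma_1\colon b\Rightarrow d$ with $\sigma_0$ on top of $\beta$ equal to $\alpha$ on top of $\sigma_1$. A biequivalence is a 2-functor essentially surjective up to equivalence on objects, essentially full up to invertible 2-cell on morphisms and fully faithful on 2-cells; a Lack fibration is a 2-functor $G$ for which equivalences $b\colon B\to GC$ lift to equivalences $a$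 with $Ga=b$, and invertible 2-cells $\beta\colon b\cong Gc$ lift to invertible 2-cells $\alpha\colon a\cong c$ with $G\alpha=\beta$. The Lack model structure on $2\mathrm{Cat}$ has these as weak equivalences and fibrations. The model structure on $\mathrm{DblCat}$ has as weak equivalences (resp.\ fibrations) the double functors $F$ with $\mathbf{H}F$ and $\mathcal{V}F$ biequivalences (resp.\ Lack fibrations); these are called double biequivalences (resp.\ double fibrations). *)

(* Strict 2-categories and strict double categories, encoded
   "single-sorted per dimension": each kind of cell forms one type, with
   boundary maps, and composition takes a proof that the arguments are
   composable.  Axioms quantify over all such proofs. *)
From Stdlib Require Import ProofIrrelevance.

(** * Strict 2-categories *)

Record TwoCatData := {
  ob : Type; mor : Type; cell : Type;
  s1 : mor -> ob; t1 : mor -> ob; id1 : ob -> mor;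
  (* c1 f g = "f then g" (diagrammatic order) *)
  c1 : forall f g : mor, t1 f = s1 g -> mor;
  s2 : cell -> mor; t2 : cell -> mor; id2 : mor -> cell;
  v2 : forall a b : cell, t2 a = s2 b -> cell;
  h2 : forall a b : cell, t1 (s2 a) = s1 (s2 b) -> cell }.

Arguments s1 {_} _. Arguments t1 {_} _. Arguments id1 {_} _.
Arguments c1 {_} _ _ _. Arguments s2 {_} _. Arguments t2 {_} _.
Arguments id2 {_} _. Arguments v2 {_} _ _ _. Arguments h2 {_} _ _ _.

Record is_2cat (C : TwoCatData) : Prop := {
  ax_id1_s : forall x : ob C, s1 (id1 x) = x;
  ax_id1_t : forall x : ob C, t1 (id1 x) = x;
  ax_c1_s : forall (f g : mor C) p, s1 (c1 f g p) = s1 f;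
  ax_c1_t : forall (f g : mor C) p, t1 (c1 f g p) = t1 g;
  ax_c1_idl : forall (f : mor C) p, c1 (id1 (s1 f)) f p = f;
  ax_c1_idr : forall (f : mor C) p, c1 f (id1 (t1 f)) p = f;
  ax_c1_assoc : forall (f g h : mor C) p q r r',
      c1 (c1 f g p) h r = c1 f (c1 g h q) r';
  ax_par_s : forall a : cell C, s1 (s2 a) = s1 (t2 a);
  ax_par_t : forall a : cell C, t1 (s2 a) = t1 (t2 a);
  ax_id2_s : forall f : mor C, s2 (id2 f) = f;
  ax_id2_t : forall f : mor C, t2 (id2 f) = f;
  ax_v2_s : forall (a b : cell C) p, s2 (v2 a b p) = s2 a;
  ax_v2_t : forall (a b : cell C) p, t2 (v2 a b p) = t2 b;
  ax_v2_idl : forall (a : cell C) p, v2 (id2 (s2 a)) a p = a;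
  ax_v2_idr : forall (a : cell C) p, v2 a (id2 (t2 a)) p = a;
  ax_v2_assoc : forall (a b c : cell C) p q r r',
      v2 (v2 a b p) c r = v2 a (v2 b c q) r';
  ax_h2_s : forall (a b : cell C) p q, s2 (h2 a b p) = c1 (s2 a) (s2 b) q;
  ax_h2_t : forall (a b : cell C) p q, t2 (h2 a b p) = c1 (t2 a) (t2 b) q;
  ax_h2_idl : forall (a : cell C) p, h2 (id2 (id1 (s1 (s2 a)))) a p = a;
  ax_h2_idr : forall (a : cell C) p, h2 a (id2 (id1 (t1 (s2 a)))) p = a;
  ax_h2_assoc : forall (a b c : cell C) p q r r',
      h2 (h2 a b p) c r = h2 a (h2 b c q) r';
  ax_h2_id2 : forall (f g : mor C) p q, h2 (id2 f) (id2 g) p = id2 (c1 f g q);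
  ax_interchange : forall (a b c d : cell C) p q r r1 r2 r3,
      h2 (v2 a b p) (v2 c d q) r = v2 (h2 a c r1) (h2 b d r2) r3 }.

Record TwoFunctorData (A B : TwoCatData) := {
  F0 : ob A -> ob B; F1 : mor A -> mor B; F2 : cell A -> cell B }.
Arguments F0 {_ _} _ _. Arguments F1 {_ _} _ _. Arguments F2 {_ _} _ _.

Record is_2functor {A B : TwoCatData} (F : TwoFunctorData A B) : Prop := {
  fax_s1 : forall f, s1 (F1 F f) = F0 F (s1 f);
  fax_t1 : forall f, t1 (F1 F f) = F0 F (t1 f);
  fax_id1 : forall x, F1 F (id1 x) = id1 (F0 F x);
  fax_c1 : forall f g p q, F1 F (c1 f g p) = c1 (F1 F f) (F1 F g) q;
  fax_s2 : forall a, s2 (F2 F a) = F1 F (s2 a);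
  fax_t2 : forall a, t2 (F2 F a) = F1 F (t2 a);
  fax_id2 : forall f, F2 F (id2 f) = id2 (F1 F f);
  fax_v2 : forall a b p q, F2 F (v2 a b p) = v2 (F2 F a) (F2 F b) q;
  fax_h2 : forall a b p q, F2 F (h2 a b p) = h2 (F2 F a) (F2 F b) q }.

Definition inv2 {C : TwoCatData} (a : cell C) : Prop :=
  exists (b : cell C) (p : t2 a = s2 b) (q : t2 b = s2 a),
    v2 a b p = id2 (s2 a) /\ v2 b a q = id2 (t2 a).

Definition iso2 {C : TwoCatData} (f g : mor C) : Prop :=
  exists a : cell C, s2 a = f /\ t2 a = g /\ inv2 a.

Definition is_equiv {C : TwoCatData} (f : mor C) : Prop :=
  exists (g : mor C) (p : t1 f = s1 g) (q : t1 g = s1 f),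
    iso2 (id1 (s1 f)) (c1 f g p) /\ iso2 (c1 g f q) (id1 (t1 f)).

Definition biequivalence {A B : TwoCatData} (F : TwoFunctorData A B) : Prop :=
  (forall y : ob B, exists (x : ob A) (f : mor B),
      s1 f = F0 F x /\ t1 f = y /\ is_equiv f) /\
  (forall (x x' : ob A) (g : mor B), s1 g = F0 F x -> t1 g = F0 F x' ->
      exists f : mor A, s1 f = x /\ t1 f = x' /\ iso2 (F1 F f) g) /\
  (forall f f' : mor A, s1 f = s1 f' -> t1 f = t1 f' ->
     forall b : cell B, s2 b = F1 F f -> t2 b = F1 F f' ->
       exists! a : cell A, s2 a = f /\ t2 a = f' /\ F2 F a = b).

Definition lack_fibration {A B : TwoCatData} (G : TwoFunctorData A B) : Prop :=
  (forall (c : ob A) (b : mor B), t1 b = F0 G c -> is_equiv b ->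
      exists a : mor A, t1 a = c /\ is_equiv a /\ F1 G a = b) /\
  (forall (c : mor A) (be : cell B), t2 be = F1 G c -> inv2 be ->
      exists al : cell A, t2 al = c /\ inv2 al /\ F2 G al = be).

(** * Strict double categories *)

Record DblCatData := {
  dob : Type; hmor : Type; vmor : Type; sq : Type;
  hs : hmor -> dob; ht : hmor -> dob; hid : dob -> hmor;
  hc : forall a b : hmor, ht a = hs b -> hmor;
  vs : vmor -> dob; vt : vmor -> dob; vid : dob -> vmor;
  vc : forall u v : vmor, vt u = vs v -> vmor;
  (* a square  u ^a_b v : left u, right v, top a, bottom b *)
  sqL : sq -> vmor; sqR : sq -> vmor; sqT : sq -> hmor; sqB : sq -> hmor;
  sqh : forall al be : sq, sqR al = sqL be -> sq;
  sqv : forall al be : sq, sqB al = sqT be -> sq;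
  idh : vmor -> sq;
  idv : hmor -> sq }.

Arguments hs {_} _. Arguments ht {_} _. Arguments hid {_} _. Arguments hc {_} _ _ _.
Arguments vs {_} _. Arguments vt {_} _. Arguments vid {_} _. Arguments vc {_} _ _ _.
Arguments sqL {_} _. Arguments sqR {_} _. Arguments sqT {_} _. Arguments sqB {_} _.
Arguments sqh {_} _ _ _. Arguments sqv {_} _ _ _. Arguments idh {_} _. Arguments idv {_} _.

Record is_dblcat (D : DblCatData) : Prop := {
  dax_hid_s : forall x : dob D, hs (hid x) = x;
  dax_hid_t : forall x : dob D, ht (hid x) = x;
  dax_hc_s : forall (a b : hmor D) p, hs (hc a b p) = hs a;
  dax_hc_t : forall (a b : hmor D) p, ht (hc a b p) = ht b;
  dax_hc_idl : forall (a : hmor D) p, hc (hid (hs a)) a p = a;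
  dax_hc_idr : forall (a : hmor D) p, hc a (hid (ht a)) p = a;
  dax_hc_assoc : forall (a b c : hmor D) p q r r', hc (hc a b p) c r = hc a (hc b c q) r';
  dax_vid_s : forall x : dob D, vs (vid x) = x;
  dax_vid_t : forall x : dob D, vt (vid x) = x;
  dax_vc_s : forall (u v : vmor D) p, vs (vc u v p) = vs u;
  dax_vc_t : forall (u v : vmor D) p, vt (vc u v p) = vt v;
  dax_vc_idl : forall (u : vmor D) p, vc (vid (vs u)) u p = u;
  dax_vc_idr : forall (u : vmor D) p, vc u (vid (vt u)) p = u;
  dax_vc_assoc : forall (u v w : vmor D) p q r r', vc (vc u v p) w r = vc u (vc v w q) r';
  dax_TL : forall a : sq D, hs (sqT a) = vs (sqL a);
  dax_TR : forall a : sq D, ht (sqT a) = vs (sqR a);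
  dax_BL : forall a : sq D, hs (sqB a) = vt (sqL a);
  dax_BR : forall a : sq D, ht (sqB a) = vt (sqR a);
  dax_sqh_L : forall (a b : sq D) p, sqL (sqh a b p) = sqL a;
  dax_sqh_R : forall (a b : sq D) p, sqR (sqh a b p) = sqR b;
  dax_sqh_T : forall (a b : sq D) p q, sqT (sqh a b p) = hc (sqT a) (sqT b) q;
  dax_sqh_B : forall (a b : sq D) p q, sqB (sqh a b p) = hc (sqB a) (sqB b) q;
  dax_sqv_T : forall (a b : sq D) p, sqT (sqv a b p) = sqT a;
  dax_sqv_B : forall (a b : sq D) p, sqB (sqv a b p) = sqB b;
  dax_sqv_L : forall (a b : sq D) p q, sqL (sqv a b p) = vc (sqL a) (sqL b) q;
  dax_sqv_R : forall (a b : sq D) p q, sqR (sqv a b p) = vc (sqR a) (sqR b) q;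
  dax_idh_L : forall u : vmor D, sqL (idh u) = u;
  dax_idh_R : forall u : vmor D, sqR (idh u) = u;
  dax_idh_T : forall u : vmor D, sqT (idh u) = hid (vs u);
  dax_idh_B : forall u : vmor D, sqB (idh u) = hid (vt u);
  dax_idv_T : forall a : hmor D, sqT (idv a) = a;
  dax_idv_B : forall a : hmor D, sqB (idv a) = a;
  dax_idv_L : forall a : hmor D, sqL (idv a) = vid (hs a);
  dax_idv_R : forall a : hmor D, sqR (idv a) = vid (ht a);
  dax_sqh_idl : forall (a : sq D) p, sqh (idh (sqL a)) a p = a;
  dax_sqh_idr : forall (a : sq D) p, sqh a (idh (sqR a)) p = a;
  dax_sqh_assoc : forall (a b c : sq D) p q r r', sqh (sqh a b p) c r = sqh a (sqh b c q) r';
  dax_sqv_idl : forall (a : sq D) p, sqv (idv (sqT a)) a p = a;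
  dax_sqv_idr : forall (a : sq D) p, sqv a (idv (sqB a)) p = a;
  dax_sqv_assoc : forall (a b c : sq D) p q r r', sqv (sqv a b p) c r = sqv a (sqv b c q) r';
  dax_idh_vc : forall (u v : vmor D) p q, idh (vc u v p) = sqv (idh u) (idh v) q;
  dax_idv_hc : forall (a b : hmor D) p q, idv (hc a b p) = sqh (idv a) (idv b) q;
  dax_idh_vid : forall x : dob D, idh (vid x) = idv (hid x);
  dax_interchange : forall (a b c d : sq D) p q r r1 r2 r3,
      sqh (sqv a b p) (sqv c d q) r = sqv (sqh a c r1) (sqh b d r2) r3 }.

Record DblFunctorData (D E : DblCatData) := {
  G0 : dob D -> dob E; Gh : hmor D -> hmor E; Gv : vmor D -> vmor E; Gs : sq D -> sq E }.
Arguments G0 {_ _} _ _. Arguments Gh {_ _} _ _. Arguments Gv {_ _} _ _. Arguments Gs {_ _} _ _.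

Record is_dblfunctor {D E : DblCatData} (G : DblFunctorData D E) : Prop := {
  gax_hs : forall a, hs (Gh G a) = G0 G (hs a);
  gax_ht : forall a, ht (Gh G a) = G0 G (ht a);
  gax_hid : forall x, Gh G (hid x) = hid (G0 G x);
  gax_hc : forall a b p q, Gh G (hc a b p) = hc (Gh G a) (Gh G b) q;
  gax_vs : forall u, vs (Gv G u) = G0 G (vs u);
  gax_vt : forall u, vt (Gv G u) = G0 G (vt u);
  gax_vid : forall x, Gv G (vid x) = vid (G0 G x);
  gax_vc : forall u v p q, Gv G (vc u v p) = vc (Gv G u) (Gv G v) q;
  gax_L : forall a, sqL (Gs G a) = Gv G (sqL a);
  gax_R : forall a, sqR (Gs G a) = Gv G (sqR a);
  gax_T : forall a, sqT (Gs G a) = Gh G (sqT a);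
  gax_B : forall a, sqB (Gs G a) = Gh G (sqB a);
  gax_sqh : forall a b p q, Gs G (sqh a b p) = sqh (Gs G a) (Gs G b) q;
  gax_sqv : forall a b p q, Gs G (sqv a b p) = sqv (Gs G a) (Gs G b) q;
  gax_idh : forall u, Gs G (idh u) = idh (Gv G u);
  gax_idv : forall a, Gs G (idv a) = idv (Gh G a) }.

(* Vertical morphisms of HH A are only identities: we represent the identity
   at x by x itself. *)

Definition HH (A : TwoCatData) : DblCatData := {|
  dob := ob A; hmor := mor A; vmor := ob A; sq := cell A;
  hs := @s1 A; ht := @t1 A; hid := @id1 A; hc := @c1 A;
  vs := fun x => x; vt := fun x => x; vid := fun x => x; vc := fun u v _ => u;
  sqL := fun a => s1 (s2 a); sqR := fun a => t1 (s2 a);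
  sqT := @s2 A; sqB := @t2 A;
  sqh := @h2 A; sqv := @v2 A;
  idh := fun x => id2 (id1 x); idv := @id2 A |}.

Lemma v2_pi (C : TwoCatData) (a a' b b' : cell C) p p' :
  a = a' -> b = b' -> v2 a b p = v2 a' b' p'.
Proof. intros -> ->. f_equal. apply proof_irrelevance. Qed.
Lemma h2_pi (C : TwoCatData) (a a' b b' : cell C) p p' :
  a = a' -> b = b' -> h2 a b p = h2 a' b' p'.
Proof. intros -> ->. f_equal. apply proof_irrelevance. Qed.

Lemma HH_is_dblcat {A : TwoCatData} (HA : is_2cat A) : is_dblcat (HH A).
Proof.
  destruct HA; constructor; simpl; intros.
  all: try (solve [eauto]); try congruence.
  - rewrite (ax_h2_s0 a b p p). apply ax_c1_s0.
  - rewrite (ax_h2_s0 a b p p). apply ax_c1_t0.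
  - subst v. symmetry.
    assert (E : forall a b p, a = id2 (s2 b) -> v2 a b p = b)
      by (intros a b p0 ->; apply ax_v2_idl0).
    apply E. rewrite ax_id2_s0. reflexivity.
Qed.

Definition HHF {A B : TwoCatData} (F : TwoFunctorData A B) :
  DblFunctorData (HH A) (HH B) :=
  Build_DblFunctorData (HH A) (HH B) (F0 F) (F1 F) (F0 F) (F2 F).

Lemma HHF_is_dblfunctor {A B : TwoCatData} {F : TwoFunctorData A B}
  (HF : is_2functor F) : is_dblfunctor (HHF F).
Proof.
  constructor; simpl; intros; try (destruct HF; solve [eauto]).
  - rewrite (fax_s2 _ HF), (fax_s1 _ HF). reflexivity.
  - rewrite (fax_s2 _ HF), (fax_t1 _ HF). reflexivity.
  - rewrite (fax_id2 _ HF), (fax_id1 _ HF). reflexivity.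
Qed.

Section DblLemmas.
Context {D : DblCatData} (HD : is_dblcat D).

Lemma sqv_pi (a a' b b' : sq D) p p' : a = a' -> b = b' -> sqv a b p = sqv a' b' p'.
Proof. intros -> ->. f_equal. apply proof_irrelevance. Qed.
Lemma sqh_pi (a a' b b' : sq D) p p' : a = a' -> b = b' -> sqh a b p = sqh a' b' p'.
Proof. intros -> ->. f_equal. apply proof_irrelevance. Qed.

Lemma vc_vid_vid (x y : dob D) p : vc (vid x) (vid y) p = vid x.
Proof.
  assert (Exy : x = y).
  { rewrite <- (dax_vid_t _ HD x), p. apply (dax_vid_s _ HD). }
  subst y.
  assert (E : forall u v q, u = vid (vs v) -> vc u v q = v)
    by (intros u v q ->; apply (dax_vc_idl _ HD)).
  apply E. rewrite (dax_vid_s _ HD). reflexivity.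
Qed.

Lemma sqv_idl' (a b : sq D) p : a = idv (sqT b) -> sqv a b p = b.
Proof. intros ->. apply (dax_sqv_idl _ HD). Qed.
Lemma sqv_idr' (a b : sq D) p : b = idv (sqB a) -> sqv a b p = a.
Proof. intros ->. apply (dax_sqv_idr _ HD). Qed.
End DblLemmas.

Definition is_glob {D : DblCatData} (a : sq D) : Prop :=
  sqL a = vid (hs (sqT a)) /\ sqR a = vid (ht (sqT a)).

Definition gsq (D : DblCatData) := { a : sq D | is_glob a }.

Section HConstr.
Context {D : DblCatData} (HD : is_dblcat D).

Lemma glob_idv (f : hmor D) : is_glob (idv f).
Proof.
  unfold is_glob. rewrite (dax_idv_T _ HD), (dax_idv_L _ HD), (dax_idv_R _ HD). split; reflexivity.
Qed.

Definition gsq_id (f : hmor D) : gsq D := exist _ (idv f) (glob_idv f).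

Lemma glob_sqv (a b : gsq D) (p : sqB (proj1_sig a) = sqT (proj1_sig b)) :
  is_glob (sqv (proj1_sig a) (proj1_sig b) p).
Proof.
  destruct a as [a [aL aR]], b as [b [bL bR]]; simpl in *.
  unfold is_glob. rewrite (dax_sqv_T _ HD).
  assert (q1 : vt (sqL a) = vs (sqL b))
    by (rewrite <- (dax_BL _ HD), <- (dax_TL _ HD); congruence).
  assert (q2 : vt (sqR a) = vs (sqR b))
    by (rewrite <- (dax_BR _ HD), <- (dax_TR _ HD); congruence).
  rewrite (dax_sqv_L _ HD _ _ _ q1), (dax_sqv_R _ HD _ _ _ q2).
  split.
  - revert q1. rewrite aL, bL. intro q1. apply (vc_vid_vid HD).
  - revert q2. rewrite aR, bR. intro q2. apply (vc_vid_vid HD).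
Qed.

Definition gsq_vcomp (a b : gsq D) (p : sqB (proj1_sig a) = sqT (proj1_sig b)) : gsq D :=
  exist _ _ (glob_sqv a b p).

Lemma glob_hcomp_ok (a b : gsq D) (p : ht (sqT (proj1_sig a)) = hs (sqT (proj1_sig b))) :
  sqR (proj1_sig a) = sqL (proj1_sig b).
Proof.
  destruct a as [a [aL aR]], b as [b [bL bR]]; simpl in *. congruence.
Qed.

Lemma glob_sqh (a b : gsq D) p :
  is_glob (sqh (proj1_sig a) (proj1_sig b) (glob_hcomp_ok a b p)).
Proof.
  pose proof (glob_hcomp_ok a b p) as E.
  destruct a as [a [aL aR]], b as [b [bL bR]]; simpl in *.
  unfold is_glob. rewrite (dax_sqh_L _ HD), (dax_sqh_R _ HD), (dax_sqh_T _ HD _ _ _ p).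
  rewrite (dax_hc_s _ HD), (dax_hc_t _ HD). split; assumption.
Qed.

Definition gsq_hcomp (a b : gsq D) p : gsq D := exist _ _ (glob_sqh a b p).

End HConstr.

Definition Hc {D : DblCatData} (HD : is_dblcat D) : TwoCatData := {|
  ob := dob D; mor := hmor D; cell := gsq D;
  s1 := @hs D; t1 := @ht D; id1 := @hid D; c1 := @hc D;
  s2 := fun a => sqT (proj1_sig a); t2 := fun a => sqB (proj1_sig a);
  id2 := gsq_id HD; v2 := gsq_vcomp HD; h2 := gsq_hcomp HD |}.

Section HFunConstr.
Context {D E : DblCatData} (HD : is_dblcat D) (HE : is_dblcat E)
        {G : DblFunctorData D E} (HG : is_dblfunctor G).

Lemma glob_G (a : gsq D) : is_glob (Gs G (proj1_sig a)).
Proof.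
  destruct a as [a [aL aR]]; simpl. unfold is_glob.
  rewrite (gax_L _ HG), (gax_R _ HG), (gax_T _ HG), aL, aR,
    (gax_vid _ HG), (gax_vid _ HG), (gax_hs _ HG), (gax_ht _ HG).
  split; reflexivity.
Qed.

Definition gsq_map (a : gsq D) : gsq E := exist _ _ (glob_G a).
End HFunConstr.

Definition HFun {D E : DblCatData} (HD : is_dblcat D) (HE : is_dblcat E)
  {G : DblFunctorData D E} (HG : is_dblfunctor G) : TwoFunctorData (Hc HD) (Hc HE) :=
  Build_TwoFunctorData (Hc HD) (Hc HE) (G0 G) (Gh G) (gsq_map HG).

(** * The 2-category  V D : objects = vertical morphisms, morphisms = squares,
    2-cells from al : (u ^a_b v) to be : (u ^c_d v) are pairs of globular
    squares sg0 : a => c, sg1 : b => d with  sg0 ; be = al ; sg1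
    (";" = vertical composition of squares, sg0 on top of be). *)

Record vcell (D : DblCatData) := {
  vsrc : sq D; vtgt : sq D; sg0 : gsq D; sg1 : gsq D;
  vcL : sqL vsrc = sqL vtgt;
  vcR : sqR vsrc = sqR vtgt;
  vc0T : sqT (proj1_sig sg0) = sqT vsrc;
  vc0B : sqB (proj1_sig sg0) = sqT vtgt;
  vc1T : sqT (proj1_sig sg1) = sqB vsrc;
  vc1B : sqB (proj1_sig sg1) = sqB vtgt;
  vceq : forall p q, sqv (proj1_sig sg0) vtgt p = sqv vsrc (proj1_sig sg1) q }.
Arguments vsrc {_} _. Arguments vtgt {_} _. Arguments sg0 {_} _. Arguments sg1 {_} _.
Arguments vcL {_} _. Arguments vcR {_} _. Arguments vc0T {_} _. Arguments vc0B {_} _.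
Arguments vc1T {_} _. Arguments vc1B {_} _. Arguments vceq {_} _ _ _.

Section VConstr.
Context {D : DblCatData} (HD : is_dblcat D).

Lemma hc_pi (a a' b b' : hmor D) p p' : a = a' -> b = b' -> hc a b p = hc a' b' p'.
Proof. intros -> ->. f_equal. apply proof_irrelevance. Qed.

Lemma vc_vid_l (x : dob D) v q : vc (vid x) v q = v.
Proof.
  assert (Ex : x = vs v) by (rewrite <- q; symmetry; apply (dax_vid_t _ HD)).
  subst x. apply (dax_vc_idl _ HD).
Qed.
Lemma vc_vid_r (x : dob D) u q : vc u (vid x) q = u.
Proof.
  assert (Ex : x = vt u) by (rewrite q; symmetry; apply (dax_vid_s _ HD)).
  subst x. apply (dax_vc_idr _ HD).
Qed.

Lemma glob_hsB (s : sq D) : is_glob s -> hs (sqB s) = hs (sqT s).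
Proof. intros [sL sR]. rewrite (dax_BL _ HD), sL. apply (dax_vid_t _ HD). Qed.
Lemma glob_htB (s : sq D) : is_glob s -> ht (sqB s) = ht (sqT s).
Proof. intros [sL sR]. rewrite (dax_BR _ HD), sR. apply (dax_vid_t _ HD). Qed.

Lemma glob_top_L (s b : sq D) e : is_glob s -> sqL (sqv s b e) = sqL b.
Proof.
  intros Hs.
  assert (q : vt (sqL s) = vs (sqL b)).
  { rewrite <- (dax_BL _ HD), <- (dax_TL _ HD), e. reflexivity. }
  rewrite (dax_sqv_L _ HD _ _ _ q). revert q. destruct Hs as [-> _]. intro q.
  apply vc_vid_l.
Qed.
Lemma glob_top_R (s b : sq D) e : is_glob s -> sqR (sqv s b e) = sqR b.
Proof.
  intros Hs.
  assert (q : vt (sqR s) = vs (sqR b)).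
  { rewrite <- (dax_BR _ HD), <- (dax_TR _ HD), e. reflexivity. }
  rewrite (dax_sqv_R _ HD _ _ _ q). revert q. destruct Hs as [_ ->]. intro q.
  apply vc_vid_l.
Qed.
Lemma glob_bot_L (a s : sq D) e : is_glob s -> sqL (sqv a s e) = sqL a.
Proof.
  intros Hs.
  assert (q : vt (sqL a) = vs (sqL s)).
  { rewrite <- (dax_BL _ HD), <- (dax_TL _ HD), e. reflexivity. }
  rewrite (dax_sqv_L _ HD _ _ _ q). revert q. destruct Hs as [-> _]. intro q.
  apply vc_vid_r.
Qed.
Lemma glob_bot_R (a s : sq D) e : is_glob s -> sqR (sqv a s e) = sqR a.
Proof.
  intros Hs.
  assert (q : vt (sqR a) = vs (sqR s)).
  { rewrite <- (dax_BR _ HD), <- (dax_TR _ HD), e. reflexivity. }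
  rewrite (dax_sqv_R _ HD _ _ _ q). revert q. destruct Hs as [_ ->]. intro q.
  apply vc_vid_r.
Qed.

Definition vcell_id (al : sq D) : vcell D.
Proof.
  refine (Build_vcell D al al (gsq_id HD (sqT al)) (gsq_id HD (sqB al))
            eq_refl eq_refl _ _ _ _ _); simpl.
  - apply (dax_idv_T _ HD).
  - apply (dax_idv_B _ HD).
  - apply (dax_idv_T _ HD).
  - apply (dax_idv_B _ HD).
  - intros p q. rewrite (sqv_idl' HD), (sqv_idr' HD); reflexivity.
Defined.

Definition vcell_v (c d : vcell D) (p : vtgt c = vsrc d) : vcell D.
Proof.
  destruct c as [al be [s0 g0] [s1 g1] cL cR c0T c0B c1T c1B ceq];
  destruct d as [be' ga [t0 h0] [t1 h1] dL dR d0T d0B d1T d1B deq];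
  simpl in *. subst be'.
  assert (P0 : sqB s0 = sqT t0) by congruence.
  assert (P1 : sqB s1 = sqT t1) by congruence.
  refine (Build_vcell D al ga
            (gsq_vcomp HD (exist _ s0 g0) (exist _ t0 h0) P0)
            (gsq_vcomp HD (exist _ s1 g1) (exist _ t1 h1) P1) _ _ _ _ _ _ _); simpl.
  - congruence.
  - congruence.
  - rewrite (dax_sqv_T _ HD). assumption.
  - rewrite (dax_sqv_B _ HD). assumption.
  - rewrite (dax_sqv_T _ HD). assumption.
  - rewrite (dax_sqv_B _ HD). assumption.
  - intros p q.
    assert (r2 : sqB s0 = sqT (sqv t0 ga d0B)) by (rewrite (dax_sqv_T _ HD); congruence).
    rewrite (dax_sqv_assoc _ HD s0 t0 ga P0 d0B p r2).
    assert (r3 : sqB be = sqT t1) by congruence.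
    assert (r4 : sqB s0 = sqT (sqv be t1 r3)) by (rewrite (dax_sqv_T _ HD); congruence).
    transitivity (sqv s0 (sqv be t1 r3) r4).
    { apply sqv_pi; [reflexivity | apply deq]. }
    assert (r6 : sqB (sqv s0 be c0B) = sqT t1) by (rewrite (dax_sqv_B _ HD); congruence).
    rewrite <- (dax_sqv_assoc _ HD s0 be t1 c0B r3 r6 r4).
    assert (r7 : sqB al = sqT s1) by congruence.
    assert (r8 : sqB (sqv al s1 r7) = sqT t1) by (rewrite (dax_sqv_B _ HD); congruence).
    transitivity (sqv (sqv al s1 r7) t1 r8).
    { apply sqv_pi; [apply ceq | reflexivity]. }
    rewrite (dax_sqv_assoc _ HD al s1 t1 r7 P1 r8 q). reflexivity.
Defined.

Definition vcell_h (c d : vcell D) (p : sqR (vsrc c) = sqL (vsrc d)) : vcell D.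
Proof.
  destruct c as [al be [s0 g0] [s1 g1] cL cR c0T c0B c1T c1B ceq];
  destruct d as [al' be' [t0 h0] [t1 h1] dL dR d0T d0B d1T d1B deq];
  simpl in *.
  assert (p' : sqR be = sqL be') by congruence.
  assert (P0 : ht (sqT s0) = hs (sqT t0))
    by (rewrite c0T, d0T, (dax_TR _ HD), (dax_TL _ HD); congruence).
  assert (P1 : ht (sqT s1) = hs (sqT t1))
    by (rewrite c1T, d1T, (dax_BR _ HD), (dax_BL _ HD); congruence).
  refine (Build_vcell D (sqh al al' p) (sqh be be' p')
            (gsq_hcomp HD (exist _ s0 g0) (exist _ t0 h0) P0)
            (gsq_hcomp HD (exist _ s1 g1) (exist _ t1 h1) P1) _ _ _ _ _ _ _); simpl.
  - rewrite !(dax_sqh_L _ HD). assumption.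
  - rewrite !(dax_sqh_R _ HD). assumption.
  - assert (q : ht (sqT al) = hs (sqT al')) by congruence.
    rewrite (dax_sqh_T _ HD _ _ _ P0), (dax_sqh_T _ HD _ _ _ q).
    apply hc_pi; assumption.
  - assert (q1 : ht (sqB s0) = hs (sqB t0))
      by (rewrite (glob_htB _ g0), (glob_hsB _ h0); assumption).
    assert (q : ht (sqT be) = hs (sqT be')) by congruence.
    rewrite (dax_sqh_B _ HD _ _ _ q1), (dax_sqh_T _ HD _ _ _ q).
    apply hc_pi; assumption.
  - assert (q : ht (sqB al) = hs (sqB al')) by congruence.
    rewrite (dax_sqh_T _ HD _ _ _ P1), (dax_sqh_B _ HD _ _ _ q).
    apply hc_pi; assumption.
  - assert (q1 : ht (sqB s1) = hs (sqB t1))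
      by (rewrite (glob_htB _ g1), (glob_hsB _ h1); assumption).
    assert (q : ht (sqB be) = hs (sqB be')) by congruence.
    rewrite (dax_sqh_B _ HD _ _ _ q1), (dax_sqh_B _ HD _ _ _ q).
    apply hc_pi; assumption.
  - intros P Q.
    assert (R : sqR (sqv s0 be c0B) = sqL (sqv t0 be' d0B))
      by (rewrite (glob_top_R _ _ _ g0), (glob_top_L _ _ _ h0); assumption).
    transitivity (sqh (sqv s0 be c0B) (sqv t0 be' d0B) R).
    { symmetry. apply (dax_interchange _ HD). }
    assert (e3 : sqB al = sqT s1) by congruence.
    assert (e4 : sqB al' = sqT t1) by congruence.
    assert (R' : sqR (sqv al s1 e3) = sqL (sqv al' t1 e4))
      by (rewrite (glob_bot_R _ _ _ g1), (glob_bot_L _ _ _ h1); assumption).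
    transitivity (sqh (sqv al s1 e3) (sqv al' t1 e4) R').
    { apply sqh_pi; [apply ceq | apply deq]. }
    apply (dax_interchange _ HD).
Defined.

End VConstr.

Definition Vc {D : DblCatData} (HD : is_dblcat D) : TwoCatData := {|
  ob := vmor D; mor := sq D; cell := vcell D;
  s1 := @sqL D; t1 := @sqR D; id1 := @idh D; c1 := @sqh D;
  s2 := @vsrc D; t2 := @vtgt D; id2 := vcell_id HD;
  v2 := vcell_v HD; h2 := vcell_h HD |}.

Section VFunConstr.
Context {D E : DblCatData} (HD : is_dblcat D) (HE : is_dblcat E)
        {G : DblFunctorData D E} (HG : is_dblfunctor G).

Definition vcell_map (c : vcell D) : vcell E.
Proof.
  refine (Build_vcell E (Gs G (vsrc c)) (Gs G (vtgt c))
            (gsq_map HG (sg0 c)) (gsq_map HG (sg1 c)) _ _ _ _ _ _ _); simpl.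
  - rewrite !(gax_L _ HG), (vcL c). reflexivity.
  - rewrite !(gax_R _ HG), (vcR c). reflexivity.
  - rewrite !(gax_T _ HG), (vc0T c). reflexivity.
  - rewrite (gax_B _ HG), (gax_T _ HG), (vc0B c). reflexivity.
  - rewrite (gax_T _ HG), (gax_B _ HG), (vc1T c). reflexivity.
  - rewrite !(gax_B _ HG), (vc1B c). reflexivity.
  - intros p q.
    rewrite <- (gax_sqv _ HG _ _ (vc0B c) p), <- (gax_sqv _ HG _ _ (eq_sym (vc1T c)) q).
    f_equal. apply vceq.
Defined.
End VFunConstr.

Definition VFun {D E : DblCatData} (HD : is_dblcat D) (HE : is_dblcat E)
  {G : DblFunctorData D E} (HG : is_dblfunctor G) : TwoFunctorData (Vc HD) (Vc HE) :=
  Build_TwoFunctorData (Vc HD) (Vc HE) (Gv G) (Gs G) (vcell_map HG).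

Definition double_biequivalence {D E : DblCatData} (HD : is_dblcat D) (HE : is_dblcat E)
  {G : DblFunctorData D E} (HG : is_dblfunctor G) : Prop :=
  biequivalence (HFun HD HE HG) /\ biequivalence (VFun HD HE HG).

Definition double_fibration {D E : DblCatData} (HD : is_dblcat D) (HE : is_dblcat E)
  {G : DblFunctorData D E} (HG : is_dblfunctor G) : Prop :=
  lack_fibration (HFun HD HE HG) /\ lack_fibration (VFun HD HE HG).

(** - The horizontal 2-category H(HH A) is A itself, with 2-cells repackaged as
      globular squares; so H(HH F) is F up to this repackaging and both
      properties transfer in both directions.  This gives the converses.
    - V(HH A) has the 2-cells of A as morphisms and, as 2-cells from al to be,
      pairs (s0, s1) of 2-cells of A with s0 ; be = al ; s1.  Such a pair is
      invertible iff both components are, and al : g => g' is an equivalence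
      in V(HH A) iff al is invertible and g is an equivalence in A.  With these
      characterisations a biequivalence (resp. Lack fibration) F is seen to
      induce one on V(HH F). *)
From Stdlib Require Import ProofIrrelevance ClassicalEpsilon.

Section TotalComposition.
Context {C : TwoCatData} (HC : is_2cat C).

Definition vcomp (a b : cell C) : cell C :=
  match excluded_middle_informative (t2 a = s2 b) with
  | left p => v2 a b p | right _ => a end.
Definition hcomp (a b : cell C) : cell C :=
  match excluded_middle_informative (t1 (s2 a) = s1 (s2 b)) with
  | left p => h2 a b p | right _ => a end.
Definition comp (f g : mor C) : mor C :=
  match excluded_middle_informative (t1 f = s1 g) with
  | left p => c1 f g p | right _ => f end.

Lemma vcomp_eq a b p : v2 a b p = vcomp a b.
Proof.
  unfold vcomp. destruct (excluded_middle_informative _); [|contradiction].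
  f_equal. apply proof_irrelevance.
Qed.
Lemma hcomp_eq a b p : h2 a b p = hcomp a b.
Proof.
  unfold hcomp. destruct (excluded_middle_informative _); [|contradiction].
  f_equal. apply proof_irrelevance.
Qed.
Lemma comp_eq f g p : c1 f g p = comp f g.
Proof.
  unfold comp. destruct (excluded_middle_informative _); [|contradiction].
  f_equal. apply proof_irrelevance.
Qed.

Definition hom1 (f : mor C) x y := s1 f = x /\ t1 f = y.
Definition hom2 (a : cell C) f g := s2 a = f /\ t2 a = g.

Lemma hom1_id x : hom1 (id1 x) x x.
Proof. split; [apply (ax_id1_s _ HC) | apply (ax_id1_t _ HC)]. Qed.
Lemma hom1_comp f g x y z : hom1 f x y -> hom1 g y z -> hom1 (comp f g) x z.
Proof.
  intros [e1 e2] [e3 e4]. assert (p : t1 f = s1 g) by congruence.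
  rewrite <- (comp_eq _ _ p).
  split; [rewrite (ax_c1_s _ HC) | rewrite (ax_c1_t _ HC)]; assumption.
Qed.
Lemma hom2_id f : hom2 (id2 f) f f.
Proof. split; [apply (ax_id2_s _ HC) | apply (ax_id2_t _ HC)]. Qed.
Lemma hom2_vcomp a b f g h : hom2 a f g -> hom2 b g h -> hom2 (vcomp a b) f h.
Proof.
  intros [e1 e2] [e3 e4]. assert (p : t2 a = s2 b) by congruence.
  rewrite <- (vcomp_eq _ _ p).
  split; [rewrite (ax_v2_s _ HC) | rewrite (ax_v2_t _ HC)]; assumption.
Qed.
Lemma hom1_par a f g x y : hom2 a f g -> hom1 f x y -> hom1 g x y.
Proof.
  intros [<- <-] [e3 e4].
  split; [rewrite <- (ax_par_s _ HC) | rewrite <- (ax_par_t _ HC)]; assumption.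
Qed.
Lemma hom2_hcomp a b f g f' g' x y z : hom2 a f g -> hom2 b f' g' ->
  hom1 f x y -> hom1 f' y z -> hom2 (hcomp a b) (comp f f') (comp g g').
Proof.
  intros Ha Hb Hf Hf'.
  destruct (hom1_par _ _ _ _ _ Ha Hf), (hom1_par _ _ _ _ _ Hb Hf').
  destruct Ha as [<- <-], Hb as [<- <-], Hf, Hf'.
  assert (p : t1 (s2 a) = s1 (s2 b)) by congruence.
  assert (q : t1 (t2 a) = s1 (t2 b)) by congruence.
  rewrite <- (hcomp_eq _ _ p). split.
  - rewrite (ax_h2_s _ HC _ _ p p), comp_eq. reflexivity.
  - rewrite (ax_h2_t _ HC _ _ p q), comp_eq. reflexivity.
Qed.

Lemma vcomposable a b f g h : hom2 a f g -> hom2 b g h -> t2 a = s2 b.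
Proof. intros [] []; congruence. Qed.
Lemma hcomposable a b f g f' g' x y z : hom2 a f g -> hom2 b f' g' ->
  hom1 f x y -> hom1 f' y z -> t1 (s2 a) = s1 (s2 b).
Proof. intros [] [] [] []; congruence. Qed.
Lemma composable f g x y z : hom1 f x y -> hom1 g y z -> t1 f = s1 g.
Proof. intros [] []; congruence. Qed.
End TotalComposition.

(** Reading off boundaries, oriented for use as hints. *)
Lemma hom2_s2 {C : TwoCatData} (a : cell C) f g : hom2 a f g -> s2 a = f.
Proof. intros []; assumption. Qed.
Lemma hom2_t2 {C : TwoCatData} (a : cell C) f g : hom2 a f g -> t2 a = g.
Proof. intros []; assumption. Qed.
Lemma hom2_s2_sym {C : TwoCatData} (a : cell C) f g : hom2 a f g -> f = s2 a.
Proof. intros []; auto. Qed.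
Lemma hom2_t2_sym {C : TwoCatData} (a : cell C) f g : hom2 a f g -> g = t2 a.
Proof. intros []; auto. Qed.
Lemma hom2_s1_sym {C : TwoCatData} (a : cell C) f g x y :
  hom2 a f g -> hom1 f x y -> x = s1 (s2 a).
Proof. intros [] []; congruence. Qed.
Lemma hom2_t1_sym {C : TwoCatData} (a : cell C) f g x y :
  hom2 a f g -> hom1 f x y -> y = t1 (s2 a).
Proof. intros [] []; congruence. Qed.

Lemma hom1_s1_sym {C : TwoCatData} (f : mor C) x y : hom1 f x y -> x = s1 f.
Proof. intros []; auto. Qed.
Lemma hom1_t1_sym {C : TwoCatData} (f : mor C) x y : hom1 f x y -> y = t1 f.
Proof. intros []; auto. Qed.

Create HintDb boundary.
#[export] Hint Resolve hom1_s1_sym hom1_t1_sym hom2_s2_sym hom2_t2_sym hom2_s1_sym hom2_t1_sym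
  : boundary.
#[export] Hint Resolve hom1_id hom1_comp hom2_id hom2_vcomp hom2_hcomp
  vcomposable hcomposable composable : boundary.
Ltac boundary := solve [eauto 6 with boundary].

Section TotalLaws.
Context {C : TwoCatData} (HC : is_2cat C).

Lemma vcomp_idl (a : cell C) (f : mor C) : f = s2 a -> vcomp (id2 f) a = a.
Proof.
  intros ->. assert (p : t2 (id2 (s2 a)) = s2 a) by apply (ax_id2_t _ HC).
  rewrite <- (vcomp_eq _ _ p). apply (ax_v2_idl _ HC).
Qed.
Lemma vcomp_idr (a : cell C) (f : mor C) : f = t2 a -> vcomp a (id2 f) = a.
Proof.
  intros ->. assert (p : t2 a = s2 (id2 (t2 a))) by (symmetry; apply (ax_id2_s _ HC)).
  rewrite <- (vcomp_eq _ _ p). apply (ax_v2_idr _ HC).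
Qed.
Lemma vcomp_assoc (a b c : cell C) : t2 a = s2 b -> t2 b = s2 c ->
  vcomp (vcomp a b) c = vcomp a (vcomp b c).
Proof.
  intros p q. rewrite <- (vcomp_eq _ _ p), <- (vcomp_eq _ _ q).
  assert (r : t2 (v2 a b p) = s2 c) by (rewrite (ax_v2_t _ HC); auto).
  assert (r' : t2 a = s2 (v2 b c q)) by (rewrite (ax_v2_s _ HC); auto).
  rewrite <- (vcomp_eq _ _ r), <- (vcomp_eq _ _ r'). apply (ax_v2_assoc _ HC).
Qed.
Lemma hcomp_assoc (a b c : cell C) : t1 (s2 a) = s1 (s2 b) -> t1 (s2 b) = s1 (s2 c) ->
  hcomp (hcomp a b) c = hcomp a (hcomp b c).
Proof.
  intros p q. rewrite <- (hcomp_eq _ _ p), <- (hcomp_eq _ _ q).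
  assert (r : t1 (s2 (h2 a b p)) = s1 (s2 c))
    by (rewrite (ax_h2_s _ HC _ _ p p), (ax_c1_t _ HC); auto).
  assert (r' : t1 (s2 a) = s1 (s2 (h2 b c q)))
    by (rewrite (ax_h2_s _ HC _ _ q q), (ax_c1_s _ HC); auto).
  rewrite <- (hcomp_eq _ _ r), <- (hcomp_eq _ _ r'). apply (ax_h2_assoc _ HC).
Qed.
Lemma hcomp_id2 (f g : mor C) : t1 f = s1 g -> hcomp (id2 f) (id2 g) = id2 (comp f g).
Proof.
  intros p. assert (p' : t1 (s2 (id2 f)) = s1 (s2 (id2 g)))
    by (rewrite !(ax_id2_s _ HC); auto).
  rewrite <- (hcomp_eq _ _ p'), <- (comp_eq _ _ p). apply (ax_h2_id2 _ HC).
Qed.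
Lemma hcomp_idr (a : cell C) (x : ob C) : x = t1 (s2 a) -> hcomp a (id2 (id1 x)) = a.
Proof.
  intros ->.
  assert (p : t1 (s2 a) = s1 (s2 (id2 (id1 (t1 (s2 a))))))
    by (rewrite (ax_id2_s _ HC), (ax_id1_s _ HC); auto).
  rewrite <- (hcomp_eq _ _ p). apply (ax_h2_idr _ HC).
Qed.
Lemma interchange (a b c d : cell C) : t2 a = s2 b -> t2 c = s2 d -> t1 (s2 a) = s1 (s2 c) ->
  hcomp (vcomp a b) (vcomp c d) = vcomp (hcomp a c) (hcomp b d).
Proof.
  intros p q r. rewrite <- (vcomp_eq _ _ p), <- (vcomp_eq _ _ q).
  assert (r0 : t1 (s2 (v2 a b p)) = s1 (s2 (v2 c d q)))
    by (rewrite !(ax_v2_s _ HC); auto).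
  assert (r2 : t1 (s2 b) = s1 (s2 d)).
  { rewrite <- p, <- q, <- (ax_par_t _ HC), <- (ax_par_s _ HC). auto. }
  assert (r3 : t2 (h2 a c r) = s2 (h2 b d r2)).
  { assert (q1 : t1 (t2 a) = s1 (t2 c))
      by (rewrite <- (ax_par_t _ HC), <- (ax_par_s _ HC); auto).
    rewrite (ax_h2_t _ HC _ _ r q1), (ax_h2_s _ HC _ _ r2 r2).
    revert q1 r2. rewrite p, q. intros. f_equal. apply proof_irrelevance. }
  rewrite <- (hcomp_eq _ _ r0), <- (hcomp_eq _ _ r), <- (hcomp_eq _ _ r2),
    <- (vcomp_eq _ _ r3).
  apply (ax_interchange _ HC).
Qed.
Lemma comp_assoc (f g h : mor C) : t1 f = s1 g -> t1 g = s1 h ->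
  comp (comp f g) h = comp f (comp g h).
Proof.
  intros p q. rewrite <- (comp_eq _ _ p), <- (comp_eq _ _ q).
  assert (r : t1 (c1 f g p) = s1 h) by (rewrite (ax_c1_t _ HC); auto).
  assert (r' : t1 f = s1 (c1 g h q)) by (rewrite (ax_c1_s _ HC); auto).
  rewrite <- (comp_eq _ _ r), <- (comp_eq _ _ r'). apply (ax_c1_assoc _ HC).
Qed.
Lemma comp_idr (f : mor C) (x : ob C) : x = t1 f -> comp f (id1 x) = f.
Proof.
  intros ->. assert (p : t1 f = s1 (id1 (t1 f))) by (symmetry; apply (ax_id1_s _ HC)).
  rewrite <- (comp_eq _ _ p). apply (ax_c1_idr _ HC).
Qed.
End TotalLaws.

Section Inverses.
Context {C : TwoCatData} (HC : is_2cat C).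

Definition inverse_pair (a b : cell C) (f g : mor C) :=
  hom2 a f g /\ hom2 b g f /\ vcomp a b = id2 f /\ vcomp b a = id2 g.

Lemma inv2_iff_inverse_pair (a : cell C) : inv2 a <-> exists b, inverse_pair a b (s2 a) (t2 a).
Proof.
  split.
  - intros [b [p [q [E1 E2]]]]. exists b. rewrite vcomp_eq in E1, E2.
    repeat split; auto.
  - intros [b [_ [[e1 e2] [E1 E2]]]].
    assert (p : t2 a = s2 b) by auto. assert (q : t2 b = s2 a) by auto.
    exists b, p, q. rewrite !vcomp_eq. auto.
Qed.

Lemma inverse_pair_hom2 (a b : cell C) f g : inverse_pair a b f g -> hom2 a f g.
Proof. intros [H _]; exact H. Qed.
Lemma inverse_pair_hom2_inv (a b : cell C) f g : inverse_pair a b f g -> hom2 b g f.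
Proof. intros [_ [H _]]; exact H. Qed.
Lemma inverse_pair_sym (a b : cell C) f g : inverse_pair a b f g -> inverse_pair b a g f.
Proof. intros (h1 & h2 & h3 & h4). repeat split; auto; apply h1 || apply h2. Qed.
Lemma inverse_pair_id (f : mor C) : inverse_pair (id2 f) (id2 f) f f.
Proof.
  assert (hom2 (id2 f) f f) by apply (hom2_id HC).
  repeat split; try apply H; apply (vcomp_idl HC); symmetry; apply (ax_id2_s _ HC).
Qed.
Lemma inverse_pair_of_inv2 (a : cell C) f g : hom2 a f g -> inv2 a ->
  exists b, inverse_pair a b f g.
Proof. intros [<- <-] H. apply inv2_iff_inverse_pair in H. exact H. Qed.
Lemma inverse_pair_of_iso2 (f g : mor C) : iso2 f g -> exists a a', inverse_pair a a' f g.
Proof.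
  intros [a [<- [<- I]]]. apply inv2_iff_inverse_pair in I. destruct I as [b Ib]. eauto.
Qed.
Lemma inv2_of_inverse_pair (a b : cell C) f g : inverse_pair a b f g -> inv2 a.
Proof.
  intros H. apply inv2_iff_inverse_pair. exists b.
  destruct H as [[<- <-] ?]. split; auto. split; auto.
Qed.

Lemma inverse_pair_vcomp (a a' b b' : cell C) f g h : inverse_pair a a' f g ->
  inverse_pair b b' g h -> inverse_pair (vcomp a b) (vcomp b' a') f h.
Proof.
  intros (A1 & A2 & A3 & A4) (B1 & B2 & B3 & B4).
  split; [boundary|]. split; [boundary|]. split.
  - rewrite (vcomp_assoc HC) by boundary. rewrite <- (vcomp_assoc HC b) by boundary.
    rewrite B3, (vcomp_idl HC) by boundary. exact A3.
  - rewrite (vcomp_assoc HC) by boundary. rewrite <- (vcomp_assoc HC a') by boundary.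
    rewrite A4, (vcomp_idl HC) by boundary. exact B4.
Qed.
Lemma inverse_pair_hcomp (a a' b b' : cell C) f g f' g' x y z :
  inverse_pair a a' f g -> inverse_pair b b' f' g' -> hom1 f x y -> hom1 f' y z ->
  inverse_pair (hcomp a b) (hcomp a' b') (comp f f') (comp g g').
Proof.
  intros (A1 & A2 & A3 & A4) (B1 & B2 & B3 & B4) X Y.
  assert (hom1 g x y) by (eapply hom1_par; eauto).
  assert (hom1 g' y z) by (eapply hom1_par; eauto).
  split; [boundary|]. split; [boundary|]. split.
  - rewrite <- (interchange HC) by boundary. rewrite A3, B3. apply (hcomp_id2 HC). boundary.
  - rewrite <- (interchange HC) by boundary. rewrite A4, B4. apply (hcomp_id2 HC). boundary.
Qed.
Lemma inverse_pair_unique (a b b' : cell C) f g :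
  inverse_pair a b f g -> inverse_pair a b' f g -> b = b'.
Proof.
  intros (A1 & A2 & A3 & A4) (B1 & B2 & B3 & B4).
  transitivity (vcomp b (vcomp a b')).
  - rewrite B3. symmetry. apply (vcomp_idr HC). boundary.
  - rewrite <- (vcomp_assoc HC) by boundary. rewrite A4. apply (vcomp_idl HC). boundary.
Qed.
End Inverses.

Section Whiskering.
Context {C : TwoCatData} (HC : is_2cat C).

Lemma whisker_exchange (al ta : cell C) g g' k k' x y z :
  hom2 al g g' -> hom2 ta k k' -> hom1 g x y -> hom1 k y z ->
  vcomp (hcomp al (id2 k)) (hcomp (id2 g') ta) = hcomp al ta /\
  vcomp (hcomp (id2 g) ta) (hcomp al (id2 k')) = hcomp al ta.
Proof.
  intros Ta Tt Tg Tk.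
  assert (hom1 g' x y) by (eapply hom1_par; eauto).
  assert (hom1 k' y z) by (eapply hom1_par; eauto).
  split; rewrite <- (interchange HC) by boundary.
  - rewrite (vcomp_idr HC al), (vcomp_idl HC ta) by boundary. reflexivity.
  - rewrite (vcomp_idl HC al), (vcomp_idr HC ta) by boundary. reflexivity.
Qed.

Lemma whisker_vcomp (Q1 Q2 : cell C) a b c h x y z :
  hom2 Q1 a b -> hom2 Q2 b c -> hom1 a x y -> hom1 h y z ->
  vcomp (hcomp Q1 (id2 h)) (hcomp Q2 (id2 h)) = hcomp (vcomp Q1 Q2) (id2 h).
Proof.
  intros T1 T2 Ta Th.
  assert (hom1 b x y) by (eapply hom1_par; eauto).
  rewrite <- (interchange HC) by boundary. rewrite (vcomp_idl HC) by boundary.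
  reflexivity.
Qed.
End Whiskering.

(** Let [al : g => g'] with [g : y -> z],
    and let [h : z -> w], [h' : w -> z] come with an invertible
    [ta : h h' => 1].  A one-sided inverse [P] of the whiskering [al h] yields a
    one-sided inverse of [al], namely [(g' ta^-1) ; (P h') ; (g ta)]. *)
Section Unwhiskering.
Context {C : TwoCatData} (HC : is_2cat C).
Variables (g g' h h' : mor C) (y z w : ob C) (al ta ta' : cell C).
Hypotheses (Tg : hom1 g y z) (Ta : hom2 al g g') (Th : hom1 h z w) (Th' : hom1 h' w z)
  (It : inverse_pair ta ta' (comp h h') (id1 z)).

Definition unwhisker (P : cell C) : cell C :=
  vcomp (hcomp (id2 g') ta') (vcomp (hcomp P (id2 h')) (hcomp (id2 g) ta)).

Lemma unwhisker_tgt_hom1 : hom1 g' y z.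
Proof. eapply hom1_par; eauto. Qed.

Lemma whisker_counit k : hom1 k y z ->
  hom2 (hcomp (id2 k) ta) (comp (comp k h) h') k /\
  hom2 (hcomp (id2 k) ta') k (comp (comp k h) h') /\
  vcomp (hcomp (id2 k) ta') (hcomp (id2 k) ta) = id2 k.
Proof.
  intros Tk.
  pose proof (inverse_pair_hcomp HC _ _ _ _ _ _ _ _ _ _ _
    (inverse_pair_id HC k) (inverse_pair_sym _ _ _ _ It) Tk (hom1_id HC z)) as Ik.
  rewrite (comp_idr HC k), <- (comp_assoc HC k h h') in Ik by boundary.
  destruct Ik as (K1 & K2 & K3 & _). auto.
Qed.

Lemma unwhisker_naturality :
  vcomp al (hcomp (id2 g') ta') = vcomp (hcomp (id2 g) ta') (hcomp (hcomp al (id2 h)) (id2 h')) /\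
  vcomp (hcomp (id2 g) ta) al = vcomp (hcomp (hcomp al (id2 h)) (id2 h')) (hcomp (id2 g') ta).
Proof.
  destruct It as (Tt & Tt' & _).
  assert (Assoc : hcomp al (id2 (comp h h')) = hcomp (hcomp al (id2 h)) (id2 h')).
  { rewrite <- (hcomp_id2 HC h h') by boundary. rewrite (hcomp_assoc HC) by boundary.
    reflexivity. }
  destruct (whisker_exchange HC al ta' _ _ _ _ _ _ _ Ta Tt' Tg (hom1_id HC z)) as [E1 E2].
  destruct (whisker_exchange HC al ta _ _ _ _ _ _ _ Ta Tt Tg ltac:(boundary)) as [E3 E4].
  rewrite (hcomp_idr HC al) in E1, E4 by boundary. rewrite Assoc in E2, E3.
  split; congruence.
Qed.

Lemma unwhisker_hom2 P : hom2 P (comp g' h) (comp g h) -> hom2 (unwhisker P) g' g.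
Proof.
  intros TP. pose proof unwhisker_tgt_hom1.
  destruct (whisker_counit g Tg) as (K1 & _), (whisker_counit g' H) as (_ & K2 & _).
  unfold unwhisker. boundary.
Qed.

Lemma unwhisker_section P : hom2 P (comp g' h) (comp g h) ->
  vcomp (hcomp al (id2 h)) P = id2 (comp g h) -> vcomp al (unwhisker P) = id2 g.
Proof.
  intros TP EP. pose proof unwhisker_tgt_hom1.
  destruct (whisker_counit g Tg) as (K1 & K1' & K1''), (whisker_counit g' H) as (_ & K2 & _).
  assert (Tal : hom2 (hcomp al (id2 h)) (comp g h) (comp g' h)) by boundary.
  assert (hom2 (hcomp P (id2 h')) (comp (comp g' h) h') (comp (comp g h) h'))
    by (eapply (hom2_hcomp HC); eauto; boundary).
  assert (hom2 (hcomp (hcomp al (id2 h)) (id2 h')) (comp (comp g h) h') (comp (comp g' h) h'))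
    by (eapply (hom2_hcomp HC); eauto; boundary).
  unfold unwhisker.
  rewrite <- (vcomp_assoc HC al) by boundary. rewrite (proj1 unwhisker_naturality).
  rewrite (vcomp_assoc HC (hcomp (id2 g) ta')) by boundary.
  rewrite <- (vcomp_assoc HC (hcomp (hcomp al (id2 h)) (id2 h'))) by boundary.
  rewrite (whisker_vcomp HC _ _ _ _ _ _ _ _ _ Tal TP) by boundary. rewrite EP.
  rewrite (hcomp_id2 HC), (vcomp_idl HC) by boundary. exact K1''.
Qed.

Lemma unwhisker_retraction P : hom2 P (comp g' h) (comp g h) ->
  vcomp P (hcomp al (id2 h)) = id2 (comp g' h) -> vcomp (unwhisker P) al = id2 g'.
Proof.
  intros TP EP. pose proof unwhisker_tgt_hom1.
  destruct (whisker_counit g Tg) as (K1 & _), (whisker_counit g' H) as (K2 & K2' & K2'').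
  assert (Tal : hom2 (hcomp al (id2 h)) (comp g h) (comp g' h)) by boundary.
  assert (hom2 (hcomp P (id2 h')) (comp (comp g' h) h') (comp (comp g h) h'))
    by (eapply (hom2_hcomp HC); eauto; boundary).
  assert (hom2 (hcomp (hcomp al (id2 h)) (id2 h')) (comp (comp g h) h') (comp (comp g' h) h'))
    by (eapply (hom2_hcomp HC); eauto; boundary).
  unfold unwhisker.
  rewrite (vcomp_assoc HC (hcomp (id2 g') ta')) by boundary.
  rewrite (vcomp_assoc HC (hcomp P (id2 h'))) by boundary.
  rewrite (proj2 unwhisker_naturality).
  rewrite <- (vcomp_assoc HC (hcomp P (id2 h'))) by boundary.
  rewrite (whisker_vcomp HC _ _ _ _ _ _ _ _ _ TP Tal) by boundary. rewrite EP.
  rewrite (hcomp_id2 HC), (vcomp_idl HC) by boundary. exact K2''.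
Qed.
End Unwhiskering.

Section InvertibleWhiskering.
Context {C : TwoCatData} (HC : is_2cat C).

Lemma inverse_pair_of_section_retraction (al K K' : cell C) g g' :
  hom2 al g g' -> hom2 K g' g -> hom2 K' g' g ->
  vcomp al K = id2 g -> vcomp K' al = id2 g' -> inverse_pair al K g g'.
Proof.
  intros Ta TK TK' E1 E2.
  assert (KK : K' = K).
  { transitivity (vcomp K' (vcomp al K)).
    - rewrite E1, (vcomp_idr HC) by boundary. reflexivity.
    - rewrite <- (vcomp_assoc HC) by boundary. rewrite E2. apply (vcomp_idl HC); boundary. }
  subst K'. repeat split; auto; apply Ta || apply TK.
Qed.

(** If [al * be] is invertible then so
    is [al]: unwhiskering the inverse of [al * be] along [g2] (resp. [g2'])
    gives a section (resp. a retraction) of [al]. *)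
Lemma invertible_of_invertible_hcomp (al be X t0 t0' t1 t1' : cell C) g g' g2 g2' y z :
  hom1 g y z -> hom2 al g g' -> hom1 g2 z y -> hom2 be g2 g2' ->
  inverse_pair (hcomp al be) X (comp g g2) (comp g' g2') ->
  inverse_pair t0 t0' (comp g2 g) (id1 z) -> inverse_pair t1 t1' (comp g2' g') (id1 z) ->
  exists K, inverse_pair al K g g'.
Proof.
  intros Tg Ta Tg2 Tb (TX & TX' & EX1 & EX2) I0 I1.
  assert (hom1 g' y z) by (eapply hom1_par; eauto).
  assert (hom1 g2' z y) by (eapply hom1_par; eauto).
  destruct (whisker_exchange HC al be _ _ _ _ _ _ _ Ta Tb Tg Tg2) as [F1 F2].
  set (P := vcomp (hcomp (id2 g') be) X).
  set (P' := vcomp X (hcomp (id2 g) be)).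
  assert (TP : hom2 P (comp g' g2) (comp g g2)) by (unfold P; boundary).
  assert (TP' : hom2 P' (comp g' g2') (comp g g2')) by (unfold P'; boundary).
  assert (S : vcomp (hcomp al (id2 g2)) P = id2 (comp g g2)).
  { unfold P. rewrite <- (vcomp_assoc HC) by boundary. rewrite F1. exact EX1. }
  assert (R : vcomp P' (hcomp al (id2 g2')) = id2 (comp g' g2')).
  { unfold P'. rewrite (vcomp_assoc HC) by boundary. rewrite F2. exact EX2. }
  exists (unwhisker g g' g t0 t0' P).
  apply (inverse_pair_of_section_retraction _ _ (unwhisker g g' g' t1 t1' P')).
  - exact Ta.
  - apply (unwhisker_hom2 HC) with (h := g2) (y := y) (z := z) (w := y) (al := al); auto.
  - apply (unwhisker_hom2 HC) with (h := g2') (y := y) (z := z) (w := y) (al := al); auto.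
  - apply (unwhisker_section HC) with (h := g2) (y := y) (z := z) (w := y); auto.
  - apply (unwhisker_retraction HC) with (h := g2') (y := y) (z := z) (w := y); auto.
Qed.
End InvertibleWhiskering.

Section TwoFunctors.
Context {A B : TwoCatData} {F : TwoFunctorData A B} (HF : is_2functor F).

Lemma functor_hom2 (a : cell A) f g : hom2 a f g -> hom2 (F2 F a) (F1 F f) (F1 F g).
Proof. intros [<- <-]. split; [apply (fax_s2 _ HF) | apply (fax_t2 _ HF)]. Qed.
Lemma functor_vcomp (a b : cell A) : t2 a = s2 b -> F2 F (vcomp a b) = vcomp (F2 F a) (F2 F b).
Proof.
  intros p. assert (q : t2 (F2 F a) = s2 (F2 F b))
    by (rewrite (fax_t2 _ HF), (fax_s2 _ HF); f_equal; auto).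
  rewrite <- (vcomp_eq _ _ p), <- (vcomp_eq _ _ q). apply (fax_v2 _ HF).
Qed.
Lemma functor_inverse_pair (a b : cell A) f g : inverse_pair a b f g ->
  inverse_pair (F2 F a) (F2 F b) (F1 F f) (F1 F g).
Proof.
  intros (A1 & A2 & A3 & A4).
  split; [apply functor_hom2; auto|]. split; [apply functor_hom2; auto|]. split.
  - rewrite <- functor_vcomp by boundary. rewrite A3. apply (fax_id2 _ HF).
  - rewrite <- functor_vcomp by boundary. rewrite A4. apply (fax_id2 _ HF).
Qed.
End TwoFunctors.

(** The horizontal 2-category of HH A is A, with 2-cells repackaged as
    globular squares: [proj1_sig] and [glob_cell] are mutually inverse. *)
Section HorizontalPart.
Context {A : TwoCatData} (HA : is_2cat A).

Definition glob_cell (a : cell A) : gsq (HH A) :=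
  exist (fun a : sq (HH A) => is_glob a) a (conj eq_refl eq_refl).

Lemma gsq_ext (a b : gsq (HH A)) : proj1_sig a = proj1_sig b -> a = b.
Proof.
  destruct a as [a pa], b as [b pb]; simpl; intros ->.
  f_equal; apply proof_irrelevance.
Qed.

Lemma inv2_H (a : cell (Hc (HH_is_dblcat HA))) : inv2 a <-> inv2 (proj1_sig a).
Proof.
  split.
  - intros [b [p [q [E1 E2]]]]. exists (proj1_sig b), p, q.
    apply (f_equal (@proj1_sig _ _)) in E1, E2. auto.
  - intros [b [p [q [E1 E2]]]]. exists (glob_cell b), p, q.
    split; apply gsq_ext; auto.
Qed.
Lemma iso2_H (f g : mor A) : @iso2 (Hc (HH_is_dblcat HA)) f g <-> iso2 f g.
Proof.
  split.
  - intros [a [E1 [E2 I]]]. exists (proj1_sig a). apply inv2_H in I. auto.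
  - intros [a [E1 [E2 I]]]. exists (glob_cell a). do 2 (split; auto). apply inv2_H. auto.
Qed.
Lemma equiv_H (f : mor A) : @is_equiv (Hc (HH_is_dblcat HA)) f <-> is_equiv f.
Proof.
  split; intros [g [p [q [I1 I2]]]]; exists g, p, q; split; apply iso2_H; auto.
Qed.
End HorizontalPart.

Section HorizontalTransfer.
Context {A B : TwoCatData} (HA : is_2cat A) (HB : is_2cat B)
  {F : TwoFunctorData A B} (HF : is_2functor F).
Notation HF' := (HFun (HH_is_dblcat HA) (HH_is_dblcat HB) (HHF_is_dblfunctor HF)).

Lemma biequivalence_H : biequivalence F <-> biequivalence HF'.
Proof.
  unfold biequivalence; simpl. split; intros (E1 & E2 & E3); split; [| split | | split].
  - intros y. destruct (E1 y) as (x & f & ? & ? & ?).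
    exists x, f. do 2 (split; auto). apply equiv_H; auto.
  - intros x x' g h1 h2. destruct (E2 x x' g h1 h2) as (f & ? & ? & ?).
    exists f. do 2 (split; auto). apply iso2_H; auto.
  - intros f f' e1 e2 b b1 b2.
    destruct (E3 f f' e1 e2 (proj1_sig b) b1 b2) as (a & (a1 & a2 & a3) & U).
    exists (glob_cell a). split.
    + do 2 (split; auto). apply gsq_ext. auto.
    + intros a' (c1 & c2 & c3). apply gsq_ext. apply U.
      do 2 (split; auto). rewrite <- c3. reflexivity.
  - intros y. destruct (E1 y) as (x & f & ? & ? & ?).
    exists x, f. do 2 (split; auto). apply (equiv_H HB); auto.
  - intros x x' g h1 h2. destruct (E2 x x' g h1 h2) as (f & ? & ? & ?).
    exists f. do 2 (split; auto). apply (iso2_H HB); auto.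
  - intros f f' e1 e2 b b1 b2.
    destruct (E3 f f' e1 e2 (glob_cell b) b1 b2) as (a & (a1 & a2 & a3) & U).
    exists (proj1_sig a). split.
    + do 2 (split; auto). apply (f_equal (@proj1_sig _ _)) in a3. exact a3.
    + intros a' (c1 & c2 & c3). assert (a = glob_cell a') as ->.
      { apply U. do 2 (split; auto). apply gsq_ext. auto. }
      reflexivity.
Qed.

Lemma lack_fibration_H : lack_fibration F <-> lack_fibration HF'.
Proof.
  unfold lack_fibration; simpl. split; intros [E1 E2]; split.
  - intros c b h e. apply (equiv_H HB) in e. destruct (E1 c b h e) as (a & ? & ? & ?).
    exists a. do 2 (split; auto). apply equiv_H; auto.
  - intros c be h i. apply (inv2_H HB) in i.
    destruct (E2 c (proj1_sig be) h i) as (al & ? & ? & ?).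
    exists (glob_cell al). split; auto. split; [apply inv2_H; auto|]. apply gsq_ext. auto.
  - intros c b h e. apply (equiv_H HB) in e. destruct (E1 c b h e) as (a & ? & ? & ?).
    exists a. do 2 (split; auto). apply (equiv_H HA); auto.
  - intros c be h i. apply (inv2_H HB (glob_cell be)) in i.
    destruct (E2 c (glob_cell be) h i) as (al & ? & ? & Eal).
    exists (proj1_sig al). split; auto. split; [apply (inv2_H HA); auto|].
    apply (f_equal (@proj1_sig _ _)) in Eal. exact Eal.
Qed.
End HorizontalTransfer.

Lemma vcell_ext {D : DblCatData} (c d : vcell D) : vsrc c = vsrc d -> vtgt c = vtgt d ->
  proj1_sig (sg0 c) = proj1_sig (sg0 d) -> proj1_sig (sg1 c) = proj1_sig (sg1 d) -> c = d.
Proof.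
  destruct c as [a b [s0 g0] [s1 g1] ? ? ? ? ? ? ?],
           d as [a' b' [t0 h0] [t1 h1] ? ? ? ? ? ? ?];
  simpl; intros -> -> -> ->.
  assert (g0 = h0) as -> by apply proof_irrelevance.
  assert (g1 = h1) as -> by apply proof_irrelevance.
  f_equal; apply proof_irrelevance.
Qed.

(** In V(HH A) a 2-cell from [al] to [be] is a pair of 2-cells
    [s0 : s2 al => s2 be], [s1 : t2 al => t2 be] of A with [s0 ; be = al ; s1];
    vertical composition is componentwise. *)
Section VerticalCells.
Context {A : TwoCatData} (HA : is_2cat A).
Notation HD := (HH_is_dblcat HA).

Lemma vcell_top_hom2 (c : vcell (HH A)) :
  hom2 (proj1_sig (sg0 c)) (s2 (vsrc c)) (s2 (vtgt c)).
Proof. split; [apply (vc0T c) | apply (vc0B c)]. Qed.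
Lemma vcell_bottom_hom2 (c : vcell (HH A)) :
  hom2 (proj1_sig (sg1 c)) (t2 (vsrc c)) (t2 (vtgt c)).
Proof. split; [apply (vc1T c) | apply (vc1B c)]. Qed.
Lemma vcell_square (c : vcell (HH A)) :
  vcomp (proj1_sig (sg0 c)) (vtgt c) = vcomp (vsrc c) (proj1_sig (sg1 c)).
Proof.
  assert (p : t2 (proj1_sig (sg0 c)) = s2 (vtgt c)) by apply (vc0B c).
  assert (q : t2 (vsrc c) = s2 (proj1_sig (sg1 c))) by (symmetry; apply (vc1T c)).
  rewrite <- (vcomp_eq _ _ p), <- (vcomp_eq _ _ q). apply (vceq c).
Qed.

Lemma vcell_v_src c d p : vsrc (vcell_v HD c d p) = vsrc c.
Proof.
  destruct c as [? ? [? ?] [? ?] ? ? ? ? ? ? ?], d as [? ? [? ?] [? ?] ? ? ? ? ? ? ?];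
  simpl in *; subst; reflexivity.
Qed.
Lemma vcell_v_tgt c d p : vtgt (vcell_v HD c d p) = vtgt d.
Proof.
  destruct c as [? ? [? ?] [? ?] ? ? ? ? ? ? ?], d as [? ? [? ?] [? ?] ? ? ? ? ? ? ?];
  simpl in *; subst; reflexivity.
Qed.
Lemma vcell_v_top c d p :
  proj1_sig (sg0 (vcell_v HD c d p)) = vcomp (proj1_sig (sg0 c)) (proj1_sig (sg0 d)).
Proof.
  destruct c as [? ? [? ?] [? ?] ? ? ? ? ? ? ?], d as [? ? [? ?] [? ?] ? ? ? ? ? ? ?];
  simpl in *; subst; simpl. apply vcomp_eq.
Qed.
Lemma vcell_v_bottom c d p :
  proj1_sig (sg1 (vcell_v HD c d p)) = vcomp (proj1_sig (sg1 c)) (proj1_sig (sg1 d)).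
Proof.
  destruct c as [? ? [? ?] [? ?] ? ? ? ? ? ? ?], d as [? ? [? ?] [? ?] ? ? ? ? ? ? ?];
  simpl in *; subst; simpl. apply vcomp_eq.
Qed.

Definition mk_vcell (al be s0 s1 : cell A) f g f' g'
  (Ta : hom2 al f g) (Tb : hom2 be f' g') (T0 : hom2 s0 f f') (T1 : hom2 s1 g g')
  (E : vcomp s0 be = vcomp al s1) : vcell (HH A).
Proof.
  refine (Build_vcell (HH A) al be (glob_cell s0) (glob_cell s1) _ _ _ _ _ _ _); simpl.
  - destruct Ta as [<- _], Tb as [<- _], T0 as [<- <-]. apply (ax_par_s _ HA).
  - destruct Ta as [<- _], Tb as [<- _], T0 as [<- <-]. apply (ax_par_t _ HA).
  - destruct Ta, T0; congruence.
  - destruct Tb, T0; congruence.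
  - destruct Ta, T1; congruence.
  - destruct Tb, T1; congruence.
  - intros p q. rewrite !vcomp_eq. exact E.
Defined.
End VerticalCells.

Section VerticalInverses.
Context {A : TwoCatData} (HA : is_2cat A).
Notation HD := (HH_is_dblcat HA).
Notation V := (Vc HD).

Lemma inv2_V_components (c : vcell (HH A)) : @inv2 V c ->
  exists s0' s1', inverse_pair (proj1_sig (sg0 c)) s0' (s2 (vsrc c)) (s2 (vtgt c)) /\
                  inverse_pair (proj1_sig (sg1 c)) s1' (t2 (vsrc c)) (t2 (vtgt c)).
Proof.
  intros [d [p [q [E1 E2]]]]. simpl in p, q.
  change (vcell_v HD c d p = vcell_id HD (vsrc c)) in E1.
  change (vcell_v HD d c q = vcell_id HD (vtgt c)) in E2.
  assert (Et : vtgt d = vsrc c) by (rewrite <- (vcell_v_tgt HA c d p), E1; reflexivity).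
  pose proof (f_equal (fun e => proj1_sig (sg0 e)) E1) as F1.
  pose proof (f_equal (fun e => proj1_sig (sg1 e)) E1) as F2.
  pose proof (f_equal (fun e => proj1_sig (sg0 e)) E2) as F3.
  pose proof (f_equal (fun e => proj1_sig (sg1 e)) E2) as F4.
  cbv beta in F1, F2, F3, F4.
  rewrite (vcell_v_top HA c d p) in F1. rewrite (vcell_v_top HA d c q) in F3.
  rewrite (vcell_v_bottom HA c d p) in F2. rewrite (vcell_v_bottom HA d c q) in F4.
  simpl in F1, F2, F3, F4.
  pose proof (vcell_top_hom2 c). pose proof (vcell_bottom_hom2 c).
  pose proof (vcell_top_hom2 d). pose proof (vcell_bottom_hom2 d).
  rewrite Et, <- p in H1, H2.
  exists (proj1_sig (sg0 d)), (proj1_sig (sg1 d)).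
  split; (split; [auto|split; [auto|split; auto]]); rewrite ?q; auto.
Qed.

Lemma inv2_V_of_components (c : vcell (HH A)) s0' s1' :
  inverse_pair (proj1_sig (sg0 c)) s0' (s2 (vsrc c)) (s2 (vtgt c)) ->
  inverse_pair (proj1_sig (sg1 c)) s1' (t2 (vsrc c)) (t2 (vtgt c)) -> @inv2 V c.
Proof.
  intros I0 I1. pose proof (vcell_square c) as Ec.
  set (al := vsrc c) in *. set (be := vtgt c) in *.
  set (x0 := proj1_sig (sg0 c)) in *. set (x1 := proj1_sig (sg1 c)) in *.
  destruct I0 as (A1 & A2 & A3 & A4), I1 as (B1 & B2 & B3 & B4).
  assert (Tal : hom2 al (s2 al) (t2 al)) by (split; reflexivity).
  assert (Tbe : hom2 be (s2 be) (t2 be)) by (split; reflexivity).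
  (* the inverse has components the inverses of x0 and x1 *)
  assert (E : vcomp s0' al = vcomp be s1').
  { transitivity (vcomp (vcomp s0' (vcomp al x1)) s1').
    - rewrite (vcomp_assoc HA s0') by boundary. rewrite (vcomp_assoc HA al) by boundary.
      rewrite B3, (vcomp_idr HA) by boundary. reflexivity.
    - rewrite <- Ec, <- (vcomp_assoc HA s0') by boundary.
      rewrite A4, (vcomp_idl HA) by boundary. reflexivity. }
  set (d := mk_vcell HA be al s0' s1' _ _ _ _ Tbe Tal A2 B2 E).
  exists d, eq_refl, eq_refl. split.
  - change (vcell_v HD c d eq_refl = vcell_id HD al).
    apply vcell_ext; rewrite ?vcell_v_src, ?vcell_v_tgt, ?vcell_v_top, ?vcell_v_bottom;
      simpl; auto.
  - change (vcell_v HD d c eq_refl = vcell_id HD be).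
    apply vcell_ext; rewrite ?vcell_v_src, ?vcell_v_tgt, ?vcell_v_top, ?vcell_v_bottom;
      simpl; auto.
Qed.

Lemma iso2_V_of (al be s0 s0' s1 s1' : cell A) f g f' g' :
  hom2 al f g -> hom2 be f' g' -> inverse_pair s0 s0' f f' -> inverse_pair s1 s1' g g' ->
  vcomp s0 be = vcomp al s1 -> @iso2 V al be.
Proof.
  intros Ta Tb I0 I1 E.
  exists (mk_vcell HA al be s0 s1 _ _ _ _ Ta Tb (inverse_pair_hom2 _ _ _ _ I0)
            (inverse_pair_hom2 _ _ _ _ I1) E).
  split; [reflexivity|]. split; [reflexivity|].
  apply (inv2_V_of_components _ s0' s1'); simpl.
  - rewrite (hom2_s2 _ _ _ Ta), (hom2_s2 _ _ _ Tb). exact I0.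
  - rewrite (hom2_t2 _ _ _ Ta), (hom2_t2 _ _ _ Tb). exact I1.
Qed.

Lemma iso2_V_components (al be : cell A) : @iso2 V al be ->
  exists s0 s0' s1 s1', inverse_pair s0 s0' (s2 al) (s2 be) /\
    inverse_pair s1 s1' (t2 al) (t2 be) /\ vcomp s0 be = vcomp al s1.
Proof.
  intros (c & <- & <- & Ic).
  destruct (inv2_V_components c Ic) as (s0' & s1' & I0 & I1).
  exists (proj1_sig (sg0 c)), s0', (proj1_sig (sg1 c)), s1'.
  split; [exact I0|]. split; [exact I1|]. apply vcell_square.
Qed.
End VerticalInverses.

Section VerticalEquivalences.
Context {A : TwoCatData} (HA : is_2cat A).
Notation V := (Vc (HH_is_dblcat HA)).

(** The pseudo-inverse of [al] is the identity 2-cell on a pseudo-inverse [h]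
    of [f]; the unit and counit have components built from those of [f]. *)
Lemma equiv_V_of (al al' : cell A) f f' x y :
  inverse_pair al al' f f' -> hom1 f x y -> is_equiv f -> @is_equiv V al.
Proof.
  intros Ia Tf (h & pf & qf & I1 & I2).
  apply inverse_pair_of_iso2 in I1, I2.
  destruct I1 as (et & et' & It), I2 as (ep & ep' & Ip).
  rewrite (comp_eq _ _ pf), <- (hom1_s1_sym _ _ _ Tf) in It.
  rewrite (comp_eq _ _ qf), <- (hom1_t1_sym _ _ _ Tf) in Ip.
  assert (Th : hom1 h y x) by (destruct Tf; split; congruence).
  pose proof (inverse_pair_hom2 _ _ _ _ Ia) as Ta.
  pose proof (inverse_pair_hom2_inv _ _ _ _ Ia) as Ta'.
  assert (Tf' : hom1 f' x y) by (eapply hom1_par; eauto).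
  pose proof (inverse_pair_hom2 _ _ _ _ It). pose proof (inverse_pair_hom2 _ _ _ _ Ip).
  assert (p : t1 (s2 al) = s1 (s2 (id2 h)))
    by (rewrite (ax_id2_s _ HA), (hom2_s2 _ _ _ Ta); destruct Tf, Th; congruence).
  assert (q : t1 (s2 (id2 h)) = s1 (s2 al))
    by (rewrite (ax_id2_s _ HA), (hom2_s2 _ _ _ Ta); destruct Tf, Th; congruence).
  exists (id2 h), p, q. simpl. rewrite !hcomp_eq.
  rewrite <- (hom2_s1_sym _ _ _ _ _ Ta Tf), <- (hom2_t1_sym _ _ _ _ _ Ta Tf).
  split.
  - (* unit: components [et] and [et ; (al h)] *)
    assert (Tah : hom2 (hcomp al (id2 h)) (comp f h) (comp f' h)) by boundary.
    apply (iso2_V_of HA _ _ et et' (vcomp et (hcomp al (id2 h))) (vcomp (hcomp al' (id2 h)) et')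
             (id1 x) (id1 x) (comp f h) (comp f' h)); try boundary.
    + eapply (inverse_pair_vcomp HA); [exact It|].
      eapply (inverse_pair_hcomp HA); eauto. apply (inverse_pair_id HA).
    + rewrite (vcomp_idl HA) by boundary. reflexivity.
  - (* counit: components [ep] and [(h al') ; ep] *)
    assert (Tha : hom2 (hcomp (id2 h) al) (comp h f) (comp h f')) by boundary.
    assert (Tha' : hom2 (hcomp (id2 h) al') (comp h f') (comp h f)) by boundary.
    apply (iso2_V_of HA _ _ ep ep' (vcomp (hcomp (id2 h) al') ep) (vcomp ep' (hcomp (id2 h) al))
             (comp h f) (comp h f') (id1 y) (id1 y)); try boundary.
    + eapply (inverse_pair_vcomp HA); [|exact Ip].
      eapply (inverse_pair_hcomp HA); eauto.
      apply (inverse_pair_id HA). apply inverse_pair_sym; exact Ia.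
    + rewrite (vcomp_idr HA) by boundary.
      rewrite <- (vcomp_assoc HA) by boundary. rewrite <- (interchange HA) by boundary.
      destruct Ia as (_ & _ & -> & _).
      rewrite (vcomp_idl HA), (hcomp_id2 HA), (vcomp_idl HA) by boundary. reflexivity.
Qed.

(** Conversely, given an equivalence [al] with pseudo-inverse [be], the
    components of the unit and counit exhibit [s2 be] as a pseudo-inverse of
    [s2 al] and show that [al * be] is invertible, hence so is [al]. *)
Lemma equiv_V_inv (al : cell A) : @is_equiv V al ->
  is_equiv (s2 al) /\ exists al', inverse_pair al al' (s2 al) (t2 al).
Proof.
  intros (be & p & q & Ic & Id). simpl in p, q, Ic, Id. rewrite hcomp_eq in Ic, Id.
  set (g := s2 al) in *. set (g' := t2 al). set (g2 := s2 be) in *. set (g2' := t2 be).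
  set (y := s1 g) in *. set (z := t1 g) in *.
  assert (Tg : hom1 g y z) by (split; reflexivity).
  assert (Ta : hom2 al g g') by (split; reflexivity).
  assert (Tb : hom2 be g2 g2') by (split; reflexivity).
  assert (Tg2 : hom1 g2 z y) by (split; auto).
  assert (Tg' : hom1 g' y z) by (eapply hom1_par; eauto).
  assert (Tg2' : hom1 g2' z y) by (eapply hom1_par; eauto).
  apply (iso2_V_components HA) in Ic, Id.
  destruct Ic as (s0 & s0' & s1 & s1' & I0 & I1 & Eab).
  destruct Id as (t0 & t0' & t1 & t1' & J0 & J1 & _).
  destruct (hom2_hcomp HA _ _ _ _ _ _ _ _ _ Ta Tb Tg Tg2) as [Eab_s Eab_t].
  destruct (hom2_hcomp HA _ _ _ _ _ _ _ _ _ Tb Ta Tg2 Tg) as [Eba_s Eba_t].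
  rewrite (ax_id2_s _ HA), Eab_s in I0. rewrite (ax_id2_t _ HA), Eab_t in I1.
  rewrite (ax_id2_s _ HA), Eba_s in J0. rewrite (ax_id2_t _ HA), Eba_t in J1.
  split.
  -
    exists g2, p, q. rewrite !comp_eq. split.
    + exists s0. pose proof I0 as ([e1 e2] & _).
      repeat split; auto. eapply inv2_of_inverse_pair; eauto.
    + exists t0. pose proof J0 as ([e1 e2] & _).
      repeat split; auto. eapply inv2_of_inverse_pair; eauto.
  - (* [al * be] is invertible, being [s0^-1 ; s1] *)
    pose proof (inverse_pair_hom2 _ _ _ _ I0). pose proof (inverse_pair_hom2_inv _ _ _ _ I0).
    pose proof (inverse_pair_hom2 _ _ _ _ I1).
    assert (E : hcomp al be = vcomp s0' s1).
    { rewrite (vcomp_idl HA s1) in Eab by boundary. rewrite <- Eab.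
      rewrite <- (vcomp_assoc HA) by boundary. destruct I0 as (_ & _ & _ & ->).
      rewrite (vcomp_idl HA) by boundary. reflexivity. }
    assert (IX : inverse_pair (hcomp al be) (vcomp s1' s0) (comp g g2) (comp g' g2')).
    { rewrite E. eapply (inverse_pair_vcomp HA); [apply inverse_pair_sym|]; eassumption. }
    apply (invertible_of_invertible_hcomp HA al be (vcomp s1' s0) t0 t0' t1 t1' g g' g2 g2' y z);
      assumption.
Qed.
End VerticalEquivalences.

(** The clauses of the definitions of biequivalence and Lack fibration:
    [biequivalence F] and [lack_fibration F] are by definition the conjunctions
    of the first three, resp. last two, of them. *)
Section Clauses.
Context {A B : TwoCatData} (F : TwoFunctorData A B).

Definition essentially_surjective : Prop :=
  forall y : ob B, exists (x : ob A) (f : mor B), s1 f = F0 F x /\ t1 f = y /\ is_equiv f.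
Definition essentially_full : Prop :=
  forall (x x' : ob A) (g : mor B), s1 g = F0 F x -> t1 g = F0 F x' ->
    exists f : mor A, s1 f = x /\ t1 f = x' /\ iso2 (F1 F f) g.
Definition fully_faithful_on_2cells : Prop :=
  forall f f' : mor A, s1 f = s1 f' -> t1 f = t1 f' ->
    forall b : cell B, s2 b = F1 F f -> t2 b = F1 F f' ->
      exists! a : cell A, s2 a = f /\ t2 a = f' /\ F2 F a = b.
Definition lifts_equivalences : Prop :=
  forall (c : ob A) (b : mor B), t1 b = F0 F c -> is_equiv b ->
    exists a : mor A, t1 a = c /\ is_equiv a /\ F1 F a = b.
Definition lifts_invertible_2cells : Prop :=
  forall (c : mor A) (be : cell B), t2 be = F1 F c -> inv2 be ->
    exists al : cell A, t2 al = c /\ inv2 al /\ F2 F al = be.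
End Clauses.

Section FaithfulLifting.
Context {A B : TwoCatData} (HA : is_2cat A) {F : TwoFunctorData A B} (HF : is_2functor F)
  (FF : fully_faithful_on_2cells F).

Lemma lift_2cell (f f' : mor A) (b : cell B) x y : hom1 f x y -> hom1 f' x y ->
  hom2 b (F1 F f) (F1 F f') -> exists a, hom2 a f f' /\ F2 F a = b.
Proof.
  intros [e1 e2] [e3 e4] [b1 b2].
  destruct (FF f f' ltac:(congruence) ltac:(congruence) b b1 b2) as (a & (a1 & a2 & a3) & _).
  exists a. repeat split; auto.
Qed.

Lemma lift_2cell_unique (a a' : cell A) f f' : hom2 a f f' -> hom2 a' f f' ->
  F2 F a = F2 F a' -> a = a'.
Proof.
  intros Ta Ta' E. pose proof (functor_hom2 HF _ _ _ Ta') as [b1 b2].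
  assert (p1 : s1 f = s1 f') by (destruct Ta as [<- <-]; apply (ax_par_s _ HA)).
  assert (p2 : t1 f = t1 f') by (destruct Ta as [<- <-]; apply (ax_par_t _ HA)).
  destruct (FF f f' p1 p2 _ b1 b2) as (w & _ & U).
  transitivity w; [symmetry|]; apply U; destruct Ta, Ta'; auto.
Qed.
End FaithfulLifting.

Section VerticalTransfer.
Context {A B : TwoCatData} (HA : is_2cat A) (HB : is_2cat B)
  {F : TwoFunctorData A B} (HF : is_2functor F).
Notation VF := (VFun (HH_is_dblcat HA) (HH_is_dblcat HB) (HHF_is_dblfunctor HF)).

(** An equivalence [f : F x -> y] gives the equivalence [id2 f] of V(HH B). *)
Lemma essentially_surjective_V : essentially_surjective F -> essentially_surjective VF.
Proof.
  intros E1 y. destruct (E1 y) as (x & f & e1 & e2 & Ef).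
  exists x, (id2 f). simpl. rewrite (ax_id2_s _ HB). do 2 (split; auto).
  apply (equiv_V_of HB _ (id2 f) f f (F0 F x) y); [apply (inverse_pair_id HB)|split|]; auto.
Qed.

(** Given [g : k => k'] in B, lift [k], [k'] up to isomorphisms [th], [th'] and
    then [th ; g ; th'^-1]; the pair [(th, th')] is an isomorphism in V(HH B). *)
Lemma essentially_full_V : essentially_full F -> fully_faithful_on_2cells F ->
  essentially_full VF.
Proof.
  intros E2 E3 x x' g e1 e2. simpl in *.
  assert (Tg : hom2 g (s2 g) (t2 g)) by (split; auto).
  assert (Tk : hom1 (t2 g) (F0 F x) (F0 F x'))
    by (apply (hom1_par HB g (s2 g)); [exact Tg | split; auto]).
  destruct (E2 x x' (s2 g) e1 e2) as (f0 & a1 & a2 & I).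
  destruct (E2 x x' (t2 g) (proj1 Tk) (proj2 Tk)) as (f1 & b1 & b2 & I').
  apply inverse_pair_of_iso2 in I, I'.
  destruct I as (th & thi & Ith), I' as (th' & thi' & Ith').
  pose proof (inverse_pair_hom2 _ _ _ _ Ith). pose proof (inverse_pair_hom2 _ _ _ _ Ith').
  pose proof (inverse_pair_hom2_inv _ _ _ _ Ith').
  assert (Tb : hom2 (vcomp (vcomp th g) thi') (F1 F f0) (F1 F f1)) by boundary.
  destruct (lift_2cell E3 f0 f1 _ x x' (conj a1 a2) (conj b1 b2) Tb) as (al & Tal & Eal).
  exists al. rewrite (hom2_s2 _ _ _ Tal). do 2 (split; auto).
  apply (iso2_V_of HB _ _ th thi th' thi' (F1 F f0) (F1 F f1) (s2 g) (t2 g));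
    auto using functor_hom2.
  rewrite Eal, (vcomp_assoc HB (vcomp th g)) by boundary.
  destruct Ith' as (_ & _ & _ & ->). rewrite (vcomp_idr HB) by boundary. reflexivity.
Qed.

(** The components of a 2-cell of V(HH B) lift uniquely, and so does the
    equation between them, since F is faithful on 2-cells. *)
Lemma fully_faithful_V : fully_faithful_on_2cells F -> fully_faithful_on_2cells VF.
Proof.
  intros E3 f f' e1 e2 b eb1 eb2. simpl in *.
  assert (Tf : hom2 f (s2 f) (t2 f)) by (split; auto).
  assert (Tf' : hom2 f' (s2 f') (t2 f')) by (split; auto).
  assert (Ts : hom1 (s2 f') (s1 (s2 f)) (t1 (s2 f))) by (split; auto).
  assert (Tt : hom1 (t2 f) (s1 (s2 f)) (t1 (s2 f)))
    by (apply (hom1_par HA f (s2 f)); [exact Tf | split; auto]).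
  assert (Tt' : hom1 (t2 f') (s1 (s2 f)) (t1 (s2 f))) by (apply (hom1_par HA f' (s2 f')); auto).
  pose proof (vcell_top_hom2 b) as T0. pose proof (vcell_bottom_hom2 b) as T1.
  pose proof (vcell_square b) as Eb.
  rewrite eb1, eb2, !(fax_s2 _ HF) in T0. rewrite eb1, eb2, !(fax_t2 _ HF) in T1.
  rewrite eb1, eb2 in Eb.
  destruct (lift_2cell E3 _ _ _ _ _ (conj eq_refl eq_refl) Ts T0) as (t0 & Tt0 & Et0).
  destruct (lift_2cell E3 _ _ _ _ _ Tt Tt' T1) as (t1 & Tt1 & Et1).
  assert (E : vcomp t0 f' = vcomp f t1).
  { apply (lift_2cell_unique HA HF E3 _ _ (s2 f) (t2 f')); try boundary.
    rewrite !(functor_vcomp HF) by boundary. rewrite Et0, Et1. exact Eb. }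
  exists (mk_vcell HA f f' t0 t1 _ _ _ _ Tf Tf' Tt0 Tt1 E). split.
  - do 2 (split; [reflexivity|]). apply vcell_ext; simpl; auto.
  - intros c (c1 & c2 & c3).
    pose proof (vcell_top_hom2 c) as C0. pose proof (vcell_bottom_hom2 c) as C1.
    rewrite c1, c2 in C0, C1.
    apply vcell_ext; simpl; auto.
    + apply (lift_2cell_unique HA HF E3 _ _ _ _ Tt0 C0).
      rewrite Et0, <- c3. reflexivity.
    + apply (lift_2cell_unique HA HF E3 _ _ _ _ Tt1 C1).
      rewrite Et1, <- c3. reflexivity.
Qed.

Lemma biequivalence_V : biequivalence F -> biequivalence VF.
Proof.
  intros (E1 & E2 & E3). split; [|split].
  - apply essentially_surjective_V; assumption.
  - apply essentially_full_V; assumption.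
  - apply fully_faithful_V; assumption.
Qed.
End VerticalTransfer.

Section VerticalFibrations.
Context {A B : TwoCatData} (HA : is_2cat A) (HB : is_2cat B)
  {F : TwoFunctorData A B} (HF : is_2functor F).
Notation VF := (VFun (HH_is_dblcat HA) (HH_is_dblcat HB) (HHF_is_dblfunctor HF)).

(** An equivalence [b : k => k'] of V(HH B) is an invertible 2-cell on an
    equivalence [k]: lift [k] to an equivalence [f], then the inverse of [b]
    to an invertible [al' : f' => f]; the inverse of [al'] lifts [b]. *)
Lemma lifts_equivalences_V : lifts_equivalences F -> lifts_invertible_2cells F ->
  lifts_equivalences VF.
Proof.
  intros E1 E2 c b eb Eb. simpl in *.
  destruct (equiv_V_inv HB b Eb) as [Ek [b' Ib]].
  destruct (E1 c (s2 b) eb Ek) as (f & f1 & f2 & f3).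
  pose proof (inverse_pair_hom2_inv _ _ _ _ Ib) as Tb'.
  assert (e' : t2 b' = F1 F f) by (rewrite f3; apply (hom2_t2 _ _ _ Tb')).
  destruct (E2 f b' e' (inv2_of_inverse_pair _ _ _ _ (inverse_pair_sym _ _ _ _ Ib)))
    as (al' & g1 & g2 & g3).
  destruct (inverse_pair_of_inv2 al' (s2 al') f (conj eq_refl g1) g2) as [al Ia].
  apply inverse_pair_sym in Ia. pose proof (inverse_pair_hom2 _ _ _ _ Ia) as Ta.
  exists al. split; [rewrite (hom2_s2 _ _ _ Ta); auto|]. split.
  - apply (equiv_V_of HA al al' f (s2 al') (s1 f) c Ia); [split|]; auto.
  - (* [F al] and [b] are both inverse to [b' = F al'] *)
    pose proof (functor_inverse_pair HF _ _ _ _ Ia) as FI.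
    rewrite g3, f3, <- (fax_s2 _ HF), g3, (hom2_s2 _ _ _ Tb') in FI.
    apply (inverse_pair_unique HB b' _ _ (t2 b) (s2 b)); apply inverse_pair_sym; assumption.
Qed.

(** An invertible 2-cell [be] of V(HH B) with target [F c] has invertible
    components [r0], [r1]; lifting them to [t0], [t1] with targets [s2 c], [t2 c],
    the pair [(t0, t1)] is an invertible 2-cell from [t0 ; c ; t1^-1] to [c]. *)
Lemma lifts_invertible_2cells_V : lifts_invertible_2cells F -> lifts_invertible_2cells VF.
Proof.
  intros E2 c be ebe Ibe. simpl in *.
  destruct (inv2_V_components HB be Ibe) as (r0' & r1' & I0 & I1).
  pose proof (vcell_square be) as Eb. rewrite ebe in I0, I1, Eb.
  rewrite (fax_s2 _ HF) in I0. rewrite (fax_t2 _ HF) in I1.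
  set (r0 := proj1_sig (sg0 be)) in *. set (r1 := proj1_sig (sg1 be)) in *.
  destruct (E2 (s2 c) r0 (hom2_t2 _ _ _ (inverse_pair_hom2 _ _ _ _ I0))
              (inv2_of_inverse_pair _ _ _ _ I0)) as (t0 & h1 & h2 & h3).
  destruct (E2 (t2 c) r1 (hom2_t2 _ _ _ (inverse_pair_hom2 _ _ _ _ I1))
              (inv2_of_inverse_pair _ _ _ _ I1)) as (t1 & k1 & k2 & k3).
  destruct (inverse_pair_of_inv2 t0 (s2 t0) (s2 c) (conj eq_refl h1) h2) as [t0i J0].
  destruct (inverse_pair_of_inv2 t1 (s2 t1) (t2 c) (conj eq_refl k1) k2) as [t1i J1].
  pose proof (inverse_pair_hom2 _ _ _ _ J0). pose proof (inverse_pair_hom2 _ _ _ _ J1).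
  pose proof (inverse_pair_hom2_inv _ _ _ _ J1).
  assert (Tc : hom2 c (s2 c) (t2 c)) by (split; auto).
  assert (Ta : hom2 (vcomp (vcomp t0 c) t1i) (s2 t0) (s2 t1)) by boundary.
  assert (E : vcomp t0 c = vcomp (vcomp (vcomp t0 c) t1i) t1).
  { rewrite (vcomp_assoc HA _ t1i) by boundary. destruct J1 as (_ & _ & _ & ->).
    rewrite (vcomp_idr HA) by boundary. reflexivity. }
  exists (mk_vcell HA _ c t0 t1 _ _ _ _ Ta Tc H H0 E).
  split; [reflexivity|]. split.
  - apply (inv2_V_of_components HA _ t0i t1i); simpl.
    + rewrite (hom2_s2 _ _ _ Ta). exact J0.
    + rewrite (hom2_t2 _ _ _ Ta). exact J1.
  - (* the image has source [r0 ; F c ; r1^-1], which is [vsrc be] *)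
    pose proof (functor_inverse_pair HF _ _ _ _ J1) as FJ.
    rewrite k3, <- (fax_s2 _ HF), k3, (hom2_s2 _ _ _ (inverse_pair_hom2 _ _ _ _ I1)) in FJ.
    assert (Fi : F2 F t1i = r1') by (eapply (inverse_pair_unique HB); eauto).
    pose proof (inverse_pair_hom2 _ _ _ _ I0). pose proof (inverse_pair_hom2 _ _ _ _ I1).
    pose proof (inverse_pair_hom2_inv _ _ _ _ I1).
    assert (TF : hom2 (F2 F c) (F1 F (s2 c)) (F1 F (t2 c))) by (apply (functor_hom2 HF); auto).
    assert (Tv : hom2 (vsrc be) (s2 (vsrc be)) (t2 (vsrc be))) by (split; auto).
    apply vcell_ext; simpl; auto.
    rewrite !(functor_vcomp HF) by boundary. rewrite h3, Fi, Eb, (vcomp_assoc HB) by boundary.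
    destruct I1 as (_ & _ & -> & _). apply (vcomp_idr HB). reflexivity.
Qed.

Lemma lack_fibration_V : lack_fibration F -> lack_fibration VF.
Proof.
  intros [E1 E2]. split.
  - apply lifts_equivalences_V; assumption.
  - apply lifts_invertible_2cells_V; assumption.
Qed.
End VerticalFibrations.

Theorem theorem6p7 (A B : TwoCatData) (HA : is_2cat A) (HB : is_2cat B)
  (F : TwoFunctorData A B) (HF : is_2functor F) :
  (biequivalence F <->
     double_biequivalence (HH_is_dblcat HA) (HH_is_dblcat HB) (HHF_is_dblfunctor HF)) /\
  (lack_fibration F <->
     double_fibration (HH_is_dblcat HA) (HH_is_dblcat HB) (HHF_is_dblfunctor HF)).
Proof.
  unfold double_biequivalence, double_fibration. split; split.
  - intros H. split; [apply biequivalence_H | apply biequivalence_V]; assumption.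
  - intros [H _]. apply (biequivalence_H HA HB HF). assumption.
  - intros H. split; [apply lack_fibration_H | apply lack_fibration_V]; assumption.
  - intros [H _]. apply (lack_fibration_H HA HB HF). assumption.
Qed.
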